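(* For $0<\varepsilon\le1$ and $z\in\mathbf{C}\setminus\mathbf{R}$ let $S_\varepsilon(z)=\sum_{n\in\mathbf{Z}}\frac{1}{(z+n)^2|z+n|^{2\varepsilon}}$. Fix $y_0>0$. Then there is a constant $C>0$ depending only on $y_0$ such that for all $z$ with $y=\mathrm{Im}(z)$ satisfying $|y|\ge y_0$ and all $0<\varepsilon\le1$, \[|S_\varepsilon(z)|\le C\left(\frac{1}{\Gamma(\varepsilon)|y|^{1+2\varepsilon}}+e^{-2\pi|y|}\right),\] where $\Gamma(s)=\int_0^\infty e^{-t}t^{s-1}dt$. *)

From Stdlib Require Import Reals.
From Coquelicot Require Import Coquelicot.
Open Scope R_scope.

Definition Gamma (s : R) : R :=
  RInt_gen (fun t => exp (- t) * Rpower t (s - 1)) (at_right 0) (Rbar_locally p_infty).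

Definition Sterm (eps : R) (w : C) : C :=
  Cinv (Cmult (Cmult w w) (RtoC (Rpower (Cmod w) (2 * eps)))).

(* S_eps(z) = sum_{n in Z} Sterm eps (z + n), written as the (absolutely convergent)
   series over n >= 0 of the paired terms for n and -(n+1). *)
Definition S (eps : R) (z : C) : C :=
  @iota C_CompleteNormedModule (fun l : C => @is_series C_AbsRing C_NormedModule (fun n : nat =>
          Cplus (Sterm eps (Cplus z (RtoC (INR n))))
                (Sterm eps (Cminus z (RtoC (INR n + 1))))) l).

(** The bound splits as [S_eps = S_0 + (S_eps - S_0)].

    For [eps = 0] the sum is elementary: [S_0(z) = -4 pi^2 q / (1 - q)^2]
    with [q = exp(2 pi i z)].  This is proved by Herglotz's trick: the
    difference [g] of the two sides is 1-periodic, bounded away from the real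
    axis (both sides have the same double pole at the integers), and
    satisfies [g(z/2) + g((z+1)/2) = 4 g(z)]; iterating, [|g| <= B / 2^k] for
    every [k], so [g = 0].  Hence [|S_0(z)| = O(exp(-2 pi |y|))].

    For the difference, put [phi(w) = |w|^(-2 eps) - 1].  Then
    [phi(w)/w^2 = phi(w)/w - phi(w+1)/(w+1) + E(w)], the first two terms
    telescope in the sum over [n], and [|E(w)| = O(eps |w|^(-5/2) +
    eps |w|^(-2-2eps))] because [|phi| = O(eps |w|^(1/2))] and
    [phi(w) - phi(w+1) = O(eps |w|^(-1-2eps))].  Comparing with integrals
    gives [|S_eps - S_0| <= C eps |y|^(-1-2eps)] for [eps <= 1/4].
    Since [Gamma(eps) <= 2/eps], this is the [1/Gamma] term; for
    [eps >= 1/4] the crude bound [|S_eps| <= C |y|^(-1-2eps)] suffices. *)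

From Stdlib Require Import Reals Lra Lia ZArith Classical.
From Coquelicot Require Import Coquelicot.
Open Scope R_scope.

Lemma exp_le_compat x y : x <= y -> exp x <= exp y.
Proof. intros [H|H]; [left; apply exp_increasing; auto | subst; lra]. Qed.

Lemma ln_le_compat x y : 0 < x -> x <= y -> ln x <= ln y.
Proof. intros Hx [H|H]; [left; apply ln_increasing; auto | subst; lra]. Qed.

Lemma ln_le_sub_1 x : 0 < x -> ln x <= x - 1.
Proof. intros Hx. generalize (exp_ineq1_le (ln x)). rewrite exp_ln; lra. Qed.

Lemma Rpower_pos x a : 0 < Rpower x a.
Proof. apply exp_pos. Qed.

Lemma Rpower_0_r x : Rpower x 0 = 1.
Proof. unfold Rpower. rewrite Rmult_0_l. apply exp_0. Qed.

Lemma Rpower_1_l a : Rpower 1 a = 1.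
Proof. unfold Rpower. rewrite ln_1, Rmult_0_r. apply exp_0. Qed.

Lemma Rle_Rpower_l_nonpos a b c : 0 < a -> a <= b -> c <= 0 -> Rpower b c <= Rpower a c.
Proof.
  intros Ha Hab Hc. apply exp_le_compat.
  assert (ln a <= ln b) by (apply ln_le_compat; lra). nra.
Qed.

Lemma Rpower_inv_base x a : 0 < x -> Rpower (/ x) a = Rpower x (- a).
Proof. intros. unfold Rpower. rewrite ln_Rinv by auto. f_equal; ring. Qed.

Lemma Rpower_sub_nat r a n : 0 < r -> Rpower r (a - INR n) = Rpower r a / r ^ n.
Proof. intros Hr. unfold Rminus. rewrite Rpower_plus, Rpower_Ropp, Rpower_pow by auto. reflexivity. Qed.

Lemma Rpower_nonpos_le_1 x a : 1 <= x -> a <= 0 -> Rpower x a <= 1.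
Proof. intros Hx Ha. rewrite <- (Rpower_0_r x). apply Rle_Rpower; lra. Qed.

Lemma Rpower_le_1_plus_inv x a : -1 <= a <= 0 -> 0 < x -> Rpower x a <= 1 + / x.
Proof.
  intros Ha Hx. assert (Hi : 0 < / x) by (apply Rinv_0_lt_compat; auto).
  destruct (Rle_dec 1 x) as [H1|H1].
  - assert (Rpower x a <= 1) by (apply Rpower_nonpos_le_1; lra). lra.
  - assert (ln x < 0) by (rewrite <- ln_1; apply ln_increasing; lra).
    assert (exp (a * ln x) <= exp (- ln x)) by (apply exp_le_compat; nra).
    rewrite exp_Ropp, exp_ln in H0 by auto. unfold Rpower. lra.
Qed.

Lemma exp_diff_le A B : Rabs (exp A - exp B) <= Rabs (A - B) * (exp A + exp B).
Proof.
  assert (HA := exp_pos A). assert (HB := exp_pos B).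
  destruct (Rle_dec B A) as [H|H].
  - assert (H1 := exp_ineq1_le (B - A)).
    assert (E : exp B = exp A * exp (B - A)) by (rewrite <- exp_plus; f_equal; ring).
    assert (exp B <= exp A) by (apply exp_le_compat; lra).
    rewrite !Rabs_pos_eq by lra. nra.
  - assert (H1 := exp_ineq1_le (A - B)).
    assert (E : exp A = exp B * exp (A - B)) by (rewrite <- exp_plus; f_equal; ring).
    assert (exp A <= exp B) by (apply exp_le_compat; lra).
    rewrite !Rabs_left1 by lra. nra.
Qed.

Lemma ln_abs_le r : 0 < r -> Rabs (ln r) <= 2 * (Rpower r (1/2) + Rpower r (-(1/2))).
Proof.
  intros Hr.
  assert (Hu := Rpower_pos r (1/2)). assert (Hv := Rpower_pos r (-(1/2))).
  assert (E1 : ln (Rpower r (1/2)) = 1/2 * ln r) by apply ln_Rpower.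
  assert (E2 : ln (Rpower r (-(1/2))) = -(1/2) * ln r) by apply ln_Rpower.
  assert (L1 := ln_le_sub_1 _ Hu). assert (L2 := ln_le_sub_1 _ Hv).
  unfold Rabs; destruct Rcase_abs; lra.
Qed.

Lemma ln_diff_le r r' : 0 < r -> 0 < r' -> Rabs (ln r - ln r') <= Rabs (r - r') / Rmin r r'.
Proof.
  intros Hr Hr'.
  assert (E1 : ln r - ln r' = ln (r / r')).
  { unfold Rdiv. rewrite ln_mult, ln_Rinv; auto. apply Rinv_0_lt_compat; auto. }
  assert (E2 : ln r' - ln r = ln (r' / r)).
  { unfold Rdiv. rewrite ln_mult, ln_Rinv; auto. apply Rinv_0_lt_compat; auto. }
  assert (H1 := ln_le_sub_1 (r / r') ltac:(apply Rdiv_lt_0_compat; auto)).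
  assert (H2 := ln_le_sub_1 (r' / r) ltac:(apply Rdiv_lt_0_compat; auto)).
  assert (Hm : 0 < Rmin r r') by (apply Rmin_glb_lt; auto).
  assert (Hm1 := Rmin_l r r'). assert (Hm2 := Rmin_r r r').
  set (q := Rabs (r - r') / Rmin r r').
  assert (Hq : Rmin r r' * q = Rabs (r - r')) by (unfold q; field; lra).
  assert (Hq0 : 0 <= q) by (apply Rdiv_le_0_compat; [apply Rabs_pos | lra]).
  assert (Ha : r / r' - 1 <= q).
  { replace (r / r' - 1) with ((r - r') / r') by (field; lra). apply Rle_div_l; [lra|].
    assert (r - r' <= Rabs (r - r')) by apply Rle_abs. nra. }
  assert (Hb : r' / r - 1 <= q).
  { replace (r' / r - 1) with ((r' - r) / r) by (field; lra). apply Rle_div_l; [lra|].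
    assert (r' - r <= Rabs (r - r')) by (rewrite Rabs_minus_sym; apply Rle_abs). nra. }
  fold q. apply Rabs_le. lra.
Qed.

(** * Real partial sums and a lattice-sum estimate *)

Fixpoint rsum (b : nat -> R) (N : nat) : R :=
  match N with O => 0 | Datatypes.S k => rsum b k + b k end.

Lemma rsum_le (a b : nat -> R) N : (forall n, (n < N)%nat -> a n <= b n) -> rsum a N <= rsum b N.
Proof.
  induction N; simpl; intros H; [lra|].
  assert (rsum a N <= rsum b N) by (apply IHN; intros; apply H; lia).
  assert (a N <= b N) by (apply H; lia). lra.
Qed.

Lemma rsum_scal c (b : nat -> R) N : rsum (fun n => c * b n) N = c * rsum b N.
Proof. induction N; simpl; [ring | rewrite IHN; ring]. Qed.

Lemma rsum_plus (a b : nat -> R) N : rsum (fun n => a n + b n) N = rsum a N + rsum b N.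
Proof. induction N; simpl; [ring | rewrite IHN; ring]. Qed.

Lemma sum_n_rsum (a : nat -> R) N : sum_n a N = rsum a (Datatypes.S N).
Proof.
  induction N.
  - rewrite sum_O. simpl. ring.
  - rewrite sum_Sn, IHN. reflexivity.
Qed.

Lemma ex_series_rsum_bounded (b : nat -> R) M :
  (forall n, 0 <= b n) -> (forall N, rsum b N <= M) -> ex_series b.
Proof.
  intros Hp Hb.
  assert (H : ex_finite_lim_seq (sum_n b)).
  { apply ex_finite_lim_seq_incr with M.
    - intros n. rewrite !sum_n_rsum. simpl. specialize (Hp (Datatypes.S n)). simpl in Hp. lra.
    - intros n. rewrite sum_n_rsum. apply Hb. }
  destruct H as [l Hl]. exists l. exact Hl.
Qed.

(* The decreasing function [t^(-al)] lies below its integral over [[u-1, u]]. *)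
Lemma Rpower_le_integral_step al u : 1 < al -> 1 < u ->
  (al - 1) * Rpower u (- al) <= Rpower (u - 1) (1 - al) - Rpower u (1 - al).
Proof.
  intros Hal Hu. unfold Rpower.
  set (L := ln u). set (L' := ln (u - 1)).
  assert (HLL : L - L' >= / u).
  { unfold L, L'.
    assert (E : u - 1 = u * ((u - 1) / u)) by (field; lra).
    rewrite E, ln_mult; [| lra | apply Rdiv_lt_0_compat; lra].
    assert (H := ln_le_sub_1 ((u - 1) / u)).
    assert (0 < (u - 1) / u) by (apply Rdiv_lt_0_compat; lra).
    assert ((u - 1) / u - 1 = - / u) by (field; lra). lra. }
  assert (E1 : (1 - al) * L' = (1 - al) * L + (al - 1) * (L - L')) by ring.
  rewrite E1, exp_plus.
  assert (H2 := exp_ineq1_le ((al - 1) * (L - L'))).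
  assert (E2 : - al * L = (1 - al) * L + - L) by ring.
  rewrite E2, exp_plus.
  assert (E3 : exp (- L) = / u) by (unfold L; rewrite exp_Ropp, exp_ln; lra).
  rewrite E3.
  assert (0 < exp ((1 - al) * L)) by apply exp_pos.
  assert (0 < / u) by (apply Rinv_0_lt_compat; lra).
  assert ((al - 1) * (L - L') >= (al - 1) * / u) by nra.
  nra.
Qed.

Lemma rsum_Rpower_shift_le al Y N : 1 < al -> 0 < Y -> (1 <= N)%nat ->
  rsum (fun n => Rpower (INR n + Y) (- al)) N <=
  Rpower Y (- al) + (Rpower Y (1 - al) - Rpower (INR N - 1 + Y) (1 - al)) / (al - 1).
Proof.
  intros Hal HY HN. induction HN.
  - simpl. replace (0 + Y) with Y by ring. replace (1 - 1 + Y) with Y by ring.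
    unfold Rdiv. rewrite Rminus_diag, Rmult_0_l. lra.
  - simpl rsum. rewrite S_INR.
    assert (H1 : 1 <= INR m) by (apply (le_INR 1); lia).
    assert (Ht := Rpower_le_integral_step al (INR m + Y) Hal ltac:(lra)).
    replace (INR m + Y - 1) with (INR m - 1 + Y) in Ht by ring.
    replace (INR m + 1 - 1 + Y) with (INR m + Y) by ring.
    assert (Hd : Rpower (INR m + Y) (- al) <=
       (Rpower (INR m - 1 + Y) (1 - al) - Rpower (INR m + Y) (1 - al)) / (al - 1)).
    { apply Rle_div_r; lra. }
    assert (E : (Rpower Y (1 - al) - Rpower (INR m - 1 + Y) (1 - al)) / (al - 1)
      + (Rpower (INR m - 1 + Y) (1 - al) - Rpower (INR m + Y) (1 - al)) / (al - 1)
      = (Rpower Y (1 - al) - Rpower (INR m + Y) (1 - al)) / (al - 1)) by (field; lra).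
    lra.
Qed.

Lemma lattice_sum_le y0 al Y N : 0 < y0 -> 2 <= al <= 4 -> y0 <= Y ->
  rsum (fun n => Rpower (sqrt (INR n ^ 2 + Y ^ 2)) (- al)) N <= 16 * (1 + / y0) * Rpower Y (1 - al).
Proof.
  intros Hy0 Hal HY.
  assert (HY0 : 0 < Y) by lra.
  assert (Hterm : forall n, Rpower (sqrt (INR n ^ 2 + Y ^ 2)) (- al) <= 16 * Rpower (INR n + Y) (- al)).
  { intros n. assert (Hn := pos_INR n).
    assert (Hs : (INR n + Y) / 2 <= sqrt (INR n ^ 2 + Y ^ 2)).
    { apply Rsqr_incr_0_var; [| apply sqrt_pos]. rewrite Rsqr_sqrt by nra. unfold Rsqr. nra. }
    eapply Rle_trans; [apply Rle_Rpower_l_nonpos; [| exact Hs | lra]; lra|].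
    unfold Rdiv. rewrite <- Rpower_mult_distr by (try apply Rinv_0_lt_compat; lra).
    rewrite Rpower_inv_base, Ropp_involutive by lra.
    assert (Rpower 2 al <= Rpower 2 (INR 4)) by (apply Rle_Rpower; simpl; lra).
    rewrite Rpower_pow in H by lra.
    assert (0 < Rpower (INR n + Y) (- al)) by apply Rpower_pos. simpl in H. nra. }
  assert (HpY := Rpower_pos Y (1 - al)).
  assert (Hi : 0 < / y0) by (apply Rinv_0_lt_compat; lra).
  destruct N as [|N]; [simpl; nra|].
  eapply Rle_trans. { apply rsum_le. intros n _. apply Hterm. }
  rewrite rsum_scal.
  assert (Hs := rsum_Rpower_shift_le al Y (Datatypes.S N) ltac:(lra) HY0 ltac:(lia)).
  assert (0 < Rpower (INR (Datatypes.S N) - 1 + Y) (1 - al)) by apply Rpower_pos.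
  assert (Hd : (Rpower Y (1 - al) - Rpower (INR (Datatypes.S N) - 1 + Y) (1 - al)) / (al - 1)
                <= Rpower Y (1 - al)) by (apply Rle_div_l; nra).
  assert (Hy : Rpower Y (- al) <= / y0 * Rpower Y (1 - al)).
  { replace (1 - al) with (1 + - al) by ring. rewrite Rpower_plus, Rpower_1 by lra.
    assert (0 < Rpower Y (- al)) by apply Rpower_pos.
    assert (/ y0 * Y >= 1).
    { apply Rle_ge. apply (Rmult_le_reg_l y0); [lra|]. rewrite <- Rmult_assoc, Rinv_r by lra. lra. }
    nra. }
  nra.
Qed.

Definition is_Clim_seq (u : nat -> C) (l : C) :=
  filterlim (u : nat -> C_NormedModule) eventually (locally (l : C_NormedModule)).

Lemma is_Clim_seq_ext u v l : (forall n, u n = v n) -> is_Clim_seq u l -> is_Clim_seq v l.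
Proof. intros H Hu. eapply filterlim_ext; [exact H | exact Hu]. Qed.

Lemma is_Clim_seq_comp_ge (u : nat -> C) l (phi : nat -> nat) :
  (forall n, (n <= phi n)%nat) -> is_Clim_seq u l -> is_Clim_seq (fun n => u (phi n)) l.
Proof.
  intros Hphi H. eapply filterlim_comp; [|exact H].
  intros Q [N HN]. exists N. intros n Hn. apply HN. specialize (Hphi n). lia.
Qed.

Lemma is_Clim_seq_const l : is_Clim_seq (fun _ => l) l.
Proof. apply filterlim_const. Qed.

Lemma is_Clim_seq_plus u v l1 l2 :
  is_Clim_seq u l1 -> is_Clim_seq v l2 -> is_Clim_seq (fun n => Cplus (u n) (v n)) (Cplus l1 l2).
Proof.
  intros H1 H2.
  eapply (filterlim_comp_2 (F := eventually) u v (fun x y : C_NormedModule => plus x y)); [exact H1 | exact H2 |].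
  apply (@filterlim_plus C_AbsRing C_NormedModule).
Qed.

Lemma is_Clim_seq_scal c u l : is_Clim_seq u l -> is_Clim_seq (fun n => Cmult c (u n)) (Cmult c l).
Proof.
  intros H. eapply filterlim_comp; [exact H|].
  apply (@filterlim_scal_r C_AbsRing C_NormedModule).
Qed.

Lemma is_Clim_seq_minus u v l1 l2 :
  is_Clim_seq u l1 -> is_Clim_seq v l2 -> is_Clim_seq (fun n => Cminus (u n) (v n)) (Cminus l1 l2).
Proof.
  intros H1 H2. apply is_Clim_seq_plus; auto.
  apply (is_Clim_seq_ext (fun n => Cmult (RtoC (-1)) (v n))); [intros n; ring|].
  replace (Copp l2) with (Cmult (RtoC (-1)) l2) by ring. apply is_Clim_seq_scal, H2.
Qed.

Lemma is_Clim_seq_unique u l1 l2 : is_Clim_seq u l1 -> is_Clim_seq u l2 -> l1 = l2.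
Proof.
  intros H1 H2. eapply (@filterlim_locally_unique nat C_AbsRing C_NormedModule); [| exact H1 | exact H2].
  apply Proper_StrongProper, eventually_filter.
Qed.

Lemma is_Clim_seq_norm_le (u : nat -> C) l B :
  is_Clim_seq u l -> (forall n, Cmod (u n) <= B) -> Cmod l <= B.
Proof.
  intros H Hb.
  assert (Hn : is_lim_seq (fun n => Cmod (u n)) (Cmod l)).
  { unfold is_lim_seq. eapply filterlim_comp; [exact H|].
    apply (@filterlim_norm C_AbsRing C_NormedModule). }
  assert (Hle : Rbar_le (Cmod l) B).
  { eapply is_lim_seq_le; [| exact Hn | apply is_lim_seq_const]. intros n; apply Hb. }
  exact Hle.
Qed.

Lemma is_Clim_seq_dominated (u : nat -> C) l (b : nat -> R) :
  eventually (fun n => Cmod (Cminus (u n) l) <= b n) -> is_lim_seq b 0 -> is_Clim_seq u l.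
Proof.
  intros [N0 Hb] Hl. apply filterlim_locally. intros eps.
  destruct (proj1 (filterlim_locally _ _) Hl eps) as [N HN].
  exists (max N N0). intros n Hn. apply norm_compat1.
  specialize (HN n ltac:(lia)). specialize (Hb n ltac:(lia)).
  change (Cmod (Cminus (u n) l) < eps).
  unfold ball in HN. simpl in HN. unfold AbsRing_ball, abs, minus, plus, opp in HN. simpl in HN.
  rewrite Ropp_0, Rplus_0_r in HN. apply Rabs_def2 in HN. lra.
Qed.

Lemma eventually_INR_gt M : eventually (fun n => M < INR n).
Proof.
  assert (H := is_lim_seq_INR). unfold is_lim_seq, filterlim, filter_le, filtermap in H.
  apply (H (fun x => M < x)). exists M. intros x Hx. exact Hx.
Qed.

Fixpoint csum (a : nat -> C) (N : nat) : C :=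
  match N with O => RtoC 0 | Datatypes.S k => Cplus (csum a k) (a k) end.

Lemma csum_ext a b N : (forall n, a n = b n) -> csum a N = csum b N.
Proof. intros H. induction N; simpl; [reflexivity | rewrite IHN, H; reflexivity]. Qed.

Lemma csum_plus a b N : csum (fun n => Cplus (a n) (b n)) N = Cplus (csum a N) (csum b N).
Proof. induction N; simpl; [ring | rewrite IHN; ring]. Qed.

Lemma csum_minus a b N : csum (fun n => Cminus (a n) (b n)) N = Cminus (csum a N) (csum b N).
Proof. induction N; simpl; [ring | rewrite IHN; ring]. Qed.

Lemma csum_S_l a N : csum a (Datatypes.S N) = Cplus (a 0%nat) (csum (fun n => a (Datatypes.S n)) N).
Proof. induction N; [simpl; ring|]. cbn [csum] in *. rewrite IHN. ring. Qed.

Lemma Cmod_csum_le (a : nat -> C) N : Cmod (csum a N) <= rsum (fun n => Cmod (a n)) N.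
Proof.
  induction N; simpl.
  - rewrite Cmod_0. lra.
  - eapply Rle_trans; [apply Cmod_triangle|]. lra.
Qed.

Lemma sum_n_csum (a : nat -> C) N : @sum_n C_AbelianMonoid a N = csum a (Datatypes.S N).
Proof.
  induction N.
  - rewrite sum_O. simpl. now rewrite Cplus_0_l.
  - rewrite sum_Sn, IHN. reflexivity.
Qed.

Lemma is_series_csum a l : @is_series C_AbsRing C_NormedModule a l <-> is_Clim_seq (csum a) l.
Proof.
  unfold is_series. split; intros H.
  - apply filterlim_locally. intros eps.
    destruct (proj1 (filterlim_locally _ _) H eps) as [N HN].
    exists (Datatypes.S N). intros [|n] Hn; [lia|]. rewrite <- sum_n_csum. apply HN. lia.
  - eapply filterlim_ext; [intros n; symmetry; apply sum_n_csum|].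
    apply (is_Clim_seq_comp_ge (csum a) l Datatypes.S); auto.
Qed.

Lemma is_Clim_seq_csum_norm_le a l (b : nat -> R) B :
  is_Clim_seq (csum a) l -> (forall n, Cmod (a n) <= b n) -> (forall N, rsum b N <= B) -> Cmod l <= B.
Proof.
  intros H Hab Hb. apply (is_Clim_seq_norm_le _ _ _ H). intros N.
  eapply Rle_trans; [apply Cmod_csum_le|]. eapply Rle_trans; [|apply (Hb N)].
  apply rsum_le. intros n _. apply Hab.
Qed.

Ltac solve_C_eq := apply injective_projections; simpl; ring.

Lemma Cmod_pair a b : Cmod (a, b) = sqrt (a ^ 2 + b ^ 2).
Proof. reflexivity. Qed.

Lemma Cmod_sq z : Cmod z ^ 2 = Re z ^ 2 + Im z ^ 2.
Proof. unfold Cmod. rewrite pow2_sqrt; auto. nra. Qed.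

Lemma Cmod_re_le (z : C) : Rabs (Re z) <= Cmod z.
Proof.
  destruct z as [a b]. rewrite Cmod_pair. simpl.
  rewrite <- sqrt_Rsqr_abs. apply sqrt_le_1_alt. unfold Rsqr. nra.
Qed.

Lemma Cmod_im_le (z : C) : Rabs (Im z) <= Cmod z.
Proof.
  destruct z as [a b]. rewrite Cmod_pair. simpl.
  rewrite <- sqrt_Rsqr_abs. apply sqrt_le_1_alt. unfold Rsqr. nra.
Qed.

Lemma Cmod_le_abs_re_im (z : C) : Cmod z <= Rabs (Re z) + Rabs (Im z).
Proof.
  destruct z as [a b]. rewrite Cmod_pair. simpl.
  assert (0 <= Rabs a) by apply Rabs_pos. assert (0 <= Rabs b) by apply Rabs_pos.
  apply Rsqr_incr_0_var; [| lra].
  rewrite Rsqr_sqrt by nra. unfold Rsqr.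
  assert (Ea := pow2_abs a). assert (Eb := pow2_abs b). nra.
Qed.

Lemma Im_Cplus_RtoC z r : Im (Cplus z (RtoC r)) = Im z.
Proof. unfold Im. simpl. ring. Qed.

Lemma Im_Cminus_RtoC z r : Im (Cminus z (RtoC r)) = Im z.
Proof. unfold Im. simpl. ring. Qed.

Lemma Re_Cminus_RtoC z r : Re (Cminus z (RtoC r)) = Re z - r.
Proof. unfold Re. simpl. ring. Qed.

Lemma Cplus_RtoC_neq_0 z r : Im z <> 0 -> Cplus z (RtoC r) <> RtoC 0.
Proof. intros Hy E. apply Hy. apply (f_equal snd) in E. simpl in E. change (Im z) with (snd z). lra. Qed.

Lemma Cminus_RtoC_neq_0 z r : Im z <> 0 -> Cminus z (RtoC r) <> RtoC 0.
Proof. intros Hy E. apply Hy. apply (f_equal snd) in E. simpl in E. change (Im z) with (snd z). lra. Qed.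

Lemma Sterm_eq_div e w : w <> RtoC 0 -> Sterm e w = Cdiv (RtoC (Rpower (Cmod w) (- (2 * e)))) (Cmult w w).
Proof.
  intros Hw. unfold Sterm. rewrite Rpower_Ropp.
  assert (Hr : 0 < Rpower (Cmod w) (2 * e)) by apply Rpower_pos.
  rewrite RtoC_inv by lra.
  assert (RtoC (Rpower (Cmod w) (2 * e)) <> RtoC 0) by (intros E; injection E; lra).
  field. auto.
Qed.

Lemma Sterm_0 w : w <> RtoC 0 -> Sterm 0 w = Cinv (Cmult w w).
Proof.
  intros Hw. rewrite Sterm_eq_div by auto. rewrite Rmult_0_r, Ropp_0, Rpower_0_r.
  field. auto.
Qed.

Lemma Cmod_Sterm e w : w <> RtoC 0 -> Cmod (Sterm e w) = Rpower (Cmod w) (- (2 + 2 * e)).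
Proof.
  intros Hw. assert (Hp : 0 < Cmod w) by (apply Cmod_gt_0; auto).
  rewrite Sterm_eq_div, Cmod_div, Cmod_mult, Cmod_R, Rabs_pos_eq by (auto using Cmult_neq_0; left; apply Rpower_pos).
  replace (- (2 + 2 * e)) with (- (2 * e) - INR 2) by (simpl; ring).
  rewrite Rpower_sub_nat by auto. simpl. f_equal. ring.
Qed.

Lemma Cmod_Sterm_le e w rho : 0 < rho -> rho <= Cmod w -> 0 <= 2 + 2 * e ->
  Cmod (Sterm e w) <= Rpower rho (- (2 + 2 * e)).
Proof.
  intros Hr Hw He. rewrite Cmod_Sterm.
  - apply Rle_Rpower_l_nonpos; lra.
  - intros E. rewrite E, Cmod_0 in Hw. lra.
Qed.

Definition Spair (e : R) (z : C) (n : nat) : C :=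
  Cplus (Sterm e (Cplus z (RtoC (INR n)))) (Sterm e (Cminus z (RtoC (INR n + 1)))).

Lemma S_eq_of_is_series e z l : @is_series C_AbsRing C_NormedModule (Spair e z) l -> S e z = l.
Proof.
  intros H. unfold S.
  apply (@iota_unique C_AbsRing C_CompleteNormedModule); [|exact H].
  intros y Hy. eapply (@filterlim_locally_unique nat C_AbsRing C_NormedModule); [ | exact Hy | exact H].
  apply Proper_StrongProper, eventually_filter.
Qed.

Lemma sqrt_le_Cmod_add_nat z n : 0 <= Re z < 1 ->
  sqrt (INR n ^ 2 + Rabs (Im z) ^ 2) <= Cmod (Cplus z (RtoC (INR n))).
Proof.
  intros Hx. destruct z as [x y]. simpl in Hx. assert (Hn := pos_INR n).
  unfold Cplus, RtoC; cbn [fst snd]. rewrite Cmod_pair. apply sqrt_le_1_alt.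
  simpl Im. rewrite pow2_abs. nra.
Qed.

Lemma sqrt_le_Cmod_sub_succ z n : 0 <= Re z < 1 ->
  sqrt (INR n ^ 2 + Rabs (Im z) ^ 2) <= Cmod (Cminus z (RtoC (INR n + 1))).
Proof.
  intros Hx. destruct z as [x y]. simpl in Hx. assert (Hn := pos_INR n).
  unfold Cminus, Cplus, Copp, RtoC; cbn [fst snd]. rewrite Cmod_pair. apply sqrt_le_1_alt.
  simpl Im. rewrite pow2_abs. nra.
Qed.

Lemma lattice_norm_pos n Y : 0 < Y -> 0 < sqrt (INR n ^ 2 + Y ^ 2).
Proof. intros HY. apply sqrt_lt_R0. assert (Hn := pos_INR n). nra. Qed.

Lemma Cmod_Spair_le e z n : 0 <= e -> 0 <= Re z < 1 -> Im z <> 0 ->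
  Cmod (Spair e z n) <= 2 * Rpower (sqrt (INR n ^ 2 + Rabs (Im z) ^ 2)) (- (2 + 2 * e)).
Proof.
  intros He Hx Hy.
  assert (Hs := lattice_norm_pos n (Rabs (Im z)) ltac:(apply Rabs_pos_lt; auto)).
  unfold Spair. eapply Rle_trans; [apply Cmod_triangle|].
  assert (H1 := Cmod_Sterm_le e _ _ Hs (sqrt_le_Cmod_add_nat z n Hx) ltac:(lra)).
  assert (H2 := Cmod_Sterm_le e _ _ Hs (sqrt_le_Cmod_sub_succ z n Hx) ltac:(lra)).
  lra.
Qed.

Lemma is_series_Spair_strip y0 e z : 0 < y0 -> 0 <= e <= 1 -> 0 <= Re z < 1 -> y0 <= Rabs (Im z) ->
  exists l, @is_series C_AbsRing C_NormedModule (Spair e z) l /\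
    Cmod l <= 32 * (1 + / y0) * Rpower (Rabs (Im z)) (- 1 - 2 * e).
Proof.
  intros Hy0 He Hx HY.
  assert (Hy : Im z <> 0) by (intros E; rewrite E, Rabs_R0 in HY; lra).
  set (Y := Rabs (Im z)) in *.
  set (b := fun n => 2 * Rpower (sqrt (INR n ^ 2 + Y ^ 2)) (- (2 + 2 * e))).
  assert (Hb : forall N, rsum b N <= 32 * (1 + / y0) * Rpower Y (- 1 - 2 * e)).
  { intros N. unfold b. rewrite rsum_scal.
    assert (H := lattice_sum_le y0 (2 + 2 * e) Y N Hy0 ltac:(lra) HY).
    replace (1 - (2 + 2 * e)) with (- 1 - 2 * e) in H by ring. lra. }
  assert (Hab : forall n, Cmod (Spair e z n) <= b n) by (intros n; apply Cmod_Spair_le; [lra | auto | auto]).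
  assert (Hex : ex_series b).
  { apply ex_series_rsum_bounded with (32 * (1 + / y0) * Rpower Y (- 1 - 2 * e)); auto.
    intros n. unfold b. assert (H := Rpower_pos (sqrt (INR n ^ 2 + Y ^ 2)) (- (2 + 2 * e))). lra. }
  destruct (ex_series_le (K := C_AbsRing) (V := C_CompleteNormedModule) (Spair e z) b Hab Hex) as [l Hl].
  exists l. split; [exact Hl|].
  exact (is_Clim_seq_csum_norm_le _ _ _ _ (proj1 (is_series_csum _ _) Hl) Hab Hb).
Qed.

(** * Integer translations *)

Lemma is_Clim_seq_tail (F : C -> C) K z (sg : R) : 0 <= K -> (sg = 1 \/ sg = -1) ->
  (forall w, 1 <= Cmod w -> Cmod (F w) <= K / Cmod w) ->
  is_Clim_seq (fun N => F (Cplus z (RtoC (sg * INR N)))) (RtoC 0).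
Proof.
  intros HK Hsg HF.
  set (A := Rabs (Re z) + 1).
  apply is_Clim_seq_dominated with (b := fun n => K * / (INR n - A)).
  - destruct (eventually_INR_gt (A + 1)) as [N0 HN0]. exists N0. intros n Hn.
    specialize (HN0 n Hn).
    replace (Cminus (F (Cplus z (RtoC (sg * INR n)))) (RtoC 0)) with (F (Cplus z (RtoC (sg * INR n)))) by ring.
    assert (Hw : INR n - A <= Cmod (Cplus z (RtoC (sg * INR n)))).
    { eapply Rle_trans; [|apply Cmod_re_le]. destruct z as [x y]. simpl.
      unfold A; simpl. destruct Hsg; subst sg; unfold Rabs; repeat destruct Rcase_abs; lra. }
    eapply Rle_trans; [apply HF; lra|]. unfold Rdiv. apply Rmult_le_compat_l; auto.
    apply Rinv_le_contravar; lra.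
  - replace (Finite 0) with (Rbar_mult K (Rbar_inv p_infty)) by (simpl; f_equal; ring).
    apply is_lim_seq_scal_l, is_lim_seq_inv; [|discriminate].
    eapply is_lim_seq_minus; [apply is_lim_seq_INR | apply is_lim_seq_const | reflexivity].
Qed.

Lemma Cmod_Sterm_le_inv e w : 0 <= e -> 1 <= Cmod w -> Cmod (Sterm e w) <= 1 / Cmod w.
Proof.
  intros He Hw. eapply Rle_trans; [apply Cmod_Sterm_le with (rho := Cmod w); lra|].
  eapply Rle_trans; [apply Rle_Rpower with (m := - (1)); lra|].
  rewrite Rpower_Ropp, Rpower_1 by lra. lra.
Qed.

(* Shifting [z] by one moves the window [-N, N) of the symmetric partial sum to
   [-N+1, N+1). *)
Lemma csum_Spair_succ e z N :
  csum (Spair e (Cplus z (RtoC 1))) N =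
  Cplus (csum (Spair e z) N)
        (Cminus (Sterm e (Cplus z (RtoC (1 * INR N)))) (Sterm e (Cplus z (RtoC (-1 * INR N))))).
Proof.
  induction N.
  - simpl. replace (Cplus z (RtoC (-1 * 0))) with (Cplus z (RtoC (1 * 0))) by solve_C_eq. ring.
  - simpl csum. rewrite IHN. unfold Spair.
    replace (Cplus (Cplus z (RtoC 1)) (RtoC (INR N))) with (Cplus z (RtoC (1 * INR (Datatypes.S N)))) by (rewrite S_INR; solve_C_eq).
    replace (Cminus (Cplus z (RtoC 1)) (RtoC (INR N + 1))) with (Cplus z (RtoC (-1 * INR N))) by solve_C_eq.
    replace (Cplus z (RtoC (INR N))) with (Cplus z (RtoC (1 * INR N))) by solve_C_eq.
    replace (Cminus z (RtoC (INR N + 1))) with (Cplus z (RtoC (-1 * INR (Datatypes.S N)))) by (rewrite S_INR; solve_C_eq).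
    ring.
Qed.

Lemma is_series_Spair_succ_iff e z l : 0 <= e ->
  @is_series C_AbsRing C_NormedModule (Spair e (Cplus z (RtoC 1))) l <->
  @is_series C_AbsRing C_NormedModule (Spair e z) l.
Proof.
  intros He. rewrite !is_series_csum.
  assert (Htail : forall sg, (sg = 1 \/ sg = -1) ->
            is_Clim_seq (fun N => Sterm e (Cplus z (RtoC (sg * INR N)))) (RtoC 0)).
  { intros sg Hsg. apply (is_Clim_seq_tail _ 1); auto; [lra|]. intros w Hw. apply Cmod_Sterm_le_inv; auto. }
  assert (Hd := is_Clim_seq_minus _ _ _ _ (Htail 1 ltac:(auto)) (Htail (-1) ltac:(auto))).
  split; intros H.
  - replace l with (Cminus l (Cminus (RtoC 0) (RtoC 0))) by ring.
    eapply is_Clim_seq_ext; [|apply (is_Clim_seq_minus _ _ _ _ H Hd)].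
    intros n. cbv beta. rewrite csum_Spair_succ. ring.
  - replace l with (Cplus l (Cminus (RtoC 0) (RtoC 0))) by ring.
    eapply is_Clim_seq_ext; [|apply (is_Clim_seq_plus _ _ _ _ H Hd)].
    intros n. cbv beta. rewrite csum_Spair_succ. reflexivity.
Qed.

Lemma translate_int_iff (Q : C -> Prop) : (forall z, Q (Cplus z (RtoC 1)) <-> Q z) ->
  forall z m, Q (Cminus z (RtoC (IZR m))) <-> Q z.
Proof.
  intros HQ.
  assert (Hnat : forall k z, Q (Cplus z (RtoC (INR k))) <-> Q z).
  { induction k; intros z.
    - replace (Cplus z (RtoC (INR 0))) with z by solve_C_eq. reflexivity.
    - rewrite <- (IHk z), <- (HQ (Cplus z (RtoC (INR k)))).
      replace (Cplus (Cplus z (RtoC (INR k))) (RtoC 1)) with (Cplus z (RtoC (INR (Datatypes.S k))))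
        by (rewrite S_INR; solve_C_eq). reflexivity. }
  intros z m. destruct (Z_le_gt_dec 0 m) as [Hp|Hn].
  - rewrite <- (Hnat (Z.to_nat m) (Cminus z (RtoC (IZR m)))).
    rewrite INR_IZR_INZ, Z2Nat.id by lia.
    replace (Cplus (Cminus z (RtoC (IZR m))) (RtoC (IZR m))) with z by solve_C_eq. reflexivity.
  - rewrite <- (Hnat (Z.to_nat (- m)) z).
    rewrite INR_IZR_INZ, Z2Nat.id, opp_IZR by lia.
    replace (Cplus z (RtoC (- IZR m))) with (Cminus z (RtoC (IZR m))) by solve_C_eq. reflexivity.
Qed.

Lemma periodic_translate_int (f : C -> C) : (forall z, Im z <> 0 -> f (Cplus z (RtoC 1)) = f z) ->
  forall z m, Im z <> 0 -> f (Cminus z (RtoC (IZR m))) = f z.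
Proof.
  intros Hf z m Hy.
  apply (translate_int_iff (fun w => Im w <> 0 /\ f w = f z)); [|auto].
  intros w. rewrite Im_Cplus_RtoC. split; intros [Hw E]; split; auto.
  - rewrite <- E. symmetry. apply Hf; auto.
  - rewrite Hf; auto.
Qed.

Lemma exists_translate_into x a : exists m : Z, a <= x - IZR m < a + 1.
Proof.
  destruct (archimed (x - a)) as [H1 H2].
  exists (up (x - a) - 1)%Z. rewrite minus_IZR. simpl. lra.
Qed.

Lemma ex_series_Spair e z : 0 <= e <= 1 -> Im z <> 0 ->
  exists l, @is_series C_AbsRing C_NormedModule (Spair e z) l.
Proof.
  intros He Hy. destruct (exists_translate_into (Re z) 0) as [m Hm].
  assert (Hy0 : 0 < Rabs (Im z)) by (apply Rabs_pos_lt; auto).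
  destruct (is_series_Spair_strip (Rabs (Im z)) e (Cminus z (RtoC (IZR m))) Hy0 He)
    as [l [Hl _]]; [rewrite Re_Cminus_RtoC; lra | rewrite Im_Cminus_RtoC; lra |].
  exists l.
  refine (proj1 (translate_int_iff (fun w => @is_series C_AbsRing C_NormedModule (Spair e w) l) _ z m) Hl).
  intros w. apply is_series_Spair_succ_iff. lra.
Qed.

Lemma S_translate_1 e z : 0 <= e <= 1 -> Im z <> 0 -> S e (Cplus z (RtoC 1)) = S e z.
Proof.
  intros He Hy. destruct (ex_series_Spair e z He Hy) as [l Hl].
  rewrite (S_eq_of_is_series e z l Hl). apply S_eq_of_is_series.
  apply is_series_Spair_succ_iff; auto; lra.
Qed.

Lemma S_translate_into_strip z : Im z <> 0 ->
  exists z0, Im z0 = Im z /\ 0 <= Re z0 < 1 /\ forall e, 0 <= e <= 1 -> S e z = S e z0.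
Proof.
  intros Hy. destruct (exists_translate_into (Re z) 0) as [m Hm].
  exists (Cminus z (RtoC (IZR m))). rewrite Im_Cminus_RtoC, Re_Cminus_RtoC.
  split; [reflexivity|]. split; [lra|]. intros e He.
  symmetry. apply (periodic_translate_int (S e)); auto.
  intros w Hw. apply S_translate_1; auto.
Qed.

Lemma Cmod_S_le y0 e z : 0 < y0 -> 0 <= e <= 1 -> y0 <= Rabs (Im z) ->
  Cmod (S e z) <= 32 * (1 + / y0) * Rpower (Rabs (Im z)) (- 1 - 2 * e).
Proof.
  intros Hy0 He HY.
  assert (Hy : Im z <> 0) by (intros E; rewrite E, Rabs_R0 in HY; lra).
  destruct (S_translate_into_strip z Hy) as [z0 [Hi [Hr HS]]]. rewrite (HS e He).
  destruct (is_series_Spair_strip y0 e z0 Hy0 He Hr ltac:(rewrite Hi; lra)) as [l [Hl Hb]].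
  rewrite (S_eq_of_is_series e z0 l Hl), <- Hi. exact Hb.
Qed.

(** * Bounds for the Gamma function *)

Section ImproperIntegral.

Variable f : R -> R.
Hypothesis f_cont : forall t, 0 < t -> continuous f t.
Hypothesis f_ge0 : forall t, 0 < t -> 0 <= f t.

Lemma ex_RInt_pos a b : 0 < a -> a <= b -> ex_RInt f a b.
Proof.
  intros Ha Hab. apply (ex_RInt_continuous (V := R_CompleteNormedModule)). intros z Hz.
  rewrite Rmin_left, Rmax_right in Hz by lra. apply f_cont; lra.
Qed.

Lemma RInt_pos_ge0 a b : 0 < a -> a <= b -> 0 <= RInt f a b.
Proof. intros Ha Hab. apply RInt_ge_0; auto. apply ex_RInt_pos; auto. intros x Hx. apply f_ge0; lra. Qed.

Lemma RInt_pos_le_interval a b a' b' : 0 < a' -> a' <= a -> a <= b -> b <= b' -> RInt f a b <= RInt f a' b'.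
Proof.
  intros Ha' Ha Hab Hb.
  rewrite <- (RInt_Chasles f a' a b') by (apply ex_RInt_pos; lra).
  rewrite <- (RInt_Chasles f a b b') by (apply ex_RInt_pos; lra).
  assert (H1 := RInt_pos_ge0 a' a Ha' Ha). assert (H2 := RInt_pos_ge0 b b' ltac:(lra) Hb).
  unfold plus; simpl. lra.
Qed.

Lemma is_RInt_gen_pos_bounded M : (forall a b, 0 < a <= b -> RInt f a b <= M) ->
  exists l, is_RInt_gen f (at_right 0) (Rbar_locally p_infty) l /\ l <= M /\
    forall a b, 0 < a <= b -> RInt f a b <= l.
Proof.
  intros HM.
  set (E := fun v => exists a b, 0 < a <= b /\ v = RInt f a b).
  assert (Hb : bound E) by (exists M; intros v [a [b [Hab ->]]]; apply HM; lra).
  assert (Hn : exists v, E v) by (exists (RInt f 1 1), 1, 1; split; [lra|auto]).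
  destruct (completeness E Hb Hn) as [l [Hub Hlub]].
  assert (Hle : forall a b, 0 < a <= b -> RInt f a b <= l) by (intros a b Hab; apply Hub; exists a, b; auto).
  exists l. split; [|split; [apply Hlub; intros v [a [b [Hab ->]]]; apply HM; lra | exact Hle]].
  intros Q [eps HQ].
  assert (Hex : exists a0 b0, 0 < a0 <= b0 /\ l - eps < RInt f a0 b0).
  { apply NNPP. intros Hne.
    assert (l <= l - eps).
    { apply Hlub. intros v [a [b [Hab ->]]]. apply Rnot_lt_le. intros Hlt.
      apply Hne. exists a, b. split; auto. }
    destruct eps; simpl in *; lra. }
  destruct Hex as [a0 [b0 [Hab0 Hlt0]]].
  exists (fun a => 0 < a < a0) (fun b => b0 < b).
  - exists (mkposreal a0 ltac:(lra)). intros y Hy Hy0. unfold ball in Hy; simpl in Hy.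
    unfold AbsRing_ball, abs, minus, plus, opp in Hy; simpl in Hy. apply Rabs_def2 in Hy. lra.
  - exists b0. auto.
  - intros a b Ha Hb2. simpl. exists (RInt f a b). split.
    + apply (RInt_correct (V := R_CompleteNormedModule)). apply ex_RInt_pos; lra.
    + apply HQ. unfold ball; simpl. unfold AbsRing_ball, abs, minus, plus, opp; simpl.
      assert (RInt f a0 b0 <= RInt f a b) by (apply RInt_pos_le_interval; lra).
      assert (RInt f a b <= l) by (apply Hle; lra).
      apply Rabs_def1; lra.
Qed.

End ImproperIntegral.

Lemma sq_succ_le_2_exp t : 0 <= t -> (1 + t) ^ 2 <= 2 * exp t.
Proof.
  intros Ht.
  assert (H := exp_ineq1_le (t / 4)).
  assert (E : exp t = exp (t / 4) ^ 4).
  { replace t with (t / 4 + t / 4 + t / 4 + t / 4) at 1 by field. rewrite !exp_plus. ring. }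
  rewrite E. assert ((1 + t / 4) ^ 4 <= exp (t / 4) ^ 4) by (apply pow_incr; lra).
  assert ((1 + t) ^ 2 <= 2 * (1 + t / 4) ^ 4) by nra. lra.
Qed.

Section GammaBound.

Variable e : R.
Hypothesis He : 0 < e <= 1.

Let gamma_integrand (t : R) : R := exp (- t) * Rpower t (e - 1).

(* [e^(-t) t^(e-1) <= 2 t^e / ((1+t)^e t (1+t))] because [(1+t)^2 <= 2 e^t] and
   [(1+t)^e <= 1+t]; the right-hand side is the derivative of
   [(2/e) (t/(1+t))^e], which lies in [[0, 2/e]]. *)
Let majorant (t : R) : R := 2 * Rpower (t / (1 + t)) e / (t * (1 + t)).
Let majorant_primitive (t : R) : R := 2 / e * Rpower (t / (1 + t)) e.

Lemma gamma_integrand_cont t : 0 < t -> continuous gamma_integrand t.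
Proof.
  intros Ht. apply (ex_derive_continuous (K := R_AbsRing) (V := R_NormedModule)).
  unfold gamma_integrand, Rpower. auto_derive. lra.
Qed.

Lemma gamma_integrand_pos t : 0 < t -> 0 < gamma_integrand t.
Proof. intros. apply Rmult_lt_0_compat; [apply exp_pos | apply Rpower_pos]. Qed.

Lemma majorant_cont t : 0 < t -> continuous majorant t.
Proof.
  intros Ht. apply (ex_derive_continuous (K := R_AbsRing) (V := R_NormedModule)). unfold majorant, Rpower.
  auto_derive. assert (0 < t / (1 + t)) by (apply Rdiv_lt_0_compat; lra).
  repeat split; try lra. nra.
Qed.

Lemma majorant_primitive_derive t : 0 < t -> is_derive majorant_primitive t (majorant t).
Proof.
  intros Ht. unfold majorant_primitive, majorant, Rpower.
  assert (Hq : 0 < t / (1 + t)) by (apply Rdiv_lt_0_compat; lra).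
  auto_derive.
  - repeat split; lra.
  - unfold Rdiv. field. repeat split; lra.
Qed.

Lemma majorant_primitive_bounds t : 0 < t -> 0 <= majorant_primitive t <= 2 / e.
Proof.
  intros Ht. unfold majorant_primitive.
  assert (Hq : 0 < t / (1 + t)) by (apply Rdiv_lt_0_compat; lra).
  assert (Hq1 : t / (1 + t) <= 1) by (apply Rle_div_l; lra).
  assert (Hr : Rpower (t / (1 + t)) e <= 1).
  { rewrite <- (Rpower_1_l e) at 2. apply Rle_Rpower_l; lra. }
  assert (0 < Rpower (t / (1 + t)) e) by apply Rpower_pos.
  assert (0 < 2 / e) by (apply Rdiv_lt_0_compat; lra).
  split; nra.
Qed.

Lemma gamma_integrand_le_majorant t : 0 < t -> gamma_integrand t <= majorant t.
Proof.
  intros Ht. unfold gamma_integrand, majorant.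
  set (A := Rpower t e). set (B := Rpower (1 + t) e). set (Et := exp t).
  assert (HA : 0 < A) by apply Rpower_pos.
  assert (HB1 : 1 <= B) by (unfold B; rewrite <- (Rpower_1_l e) at 1; apply Rle_Rpower_l; lra).
  assert (HB2 : B <= 1 + t) by (unfold B; rewrite <- (Rpower_1 (1 + t)) at 2 by lra; apply Rle_Rpower; lra).
  assert (HE : 0 < Et) by apply exp_pos.
  assert (HEt : (1 + t) ^ 2 <= 2 * Et) by (apply sq_succ_le_2_exp; lra).
  assert (E2 : Rpower t (e - 1) = A * / t).
  { unfold A, Rminus. rewrite Rpower_plus, Rpower_Ropp, Rpower_1 by lra. reflexivity. }
  assert (E3 : Rpower (t / (1 + t)) e = A * / B).
  { unfold A, B, Rdiv. rewrite <- Rpower_mult_distr by (try apply Rinv_0_lt_compat; lra).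
    rewrite Rpower_inv_base, Rpower_Ropp by lra. reflexivity. }
  rewrite exp_Ropp, E2, E3. fold Et.
  assert (D : 2 * (A * / B) / (t * (1 + t)) - / Et * (A * / t)
              = A / (t * Et * B * (1 + t)) * (2 * Et - B * (1 + t))) by (field; repeat split; lra).
  assert (0 <= A / (t * Et * B * (1 + t))).
  { apply Rlt_le, Rdiv_lt_0_compat; auto. repeat apply Rmult_lt_0_compat; lra. }
  assert (0 <= 2 * Et - B * (1 + t)) by nra.
  assert (0 <= A / (t * Et * B * (1 + t)) * (2 * Et - B * (1 + t))) by (apply Rmult_le_pos; auto).
  lra.
Qed.

Lemma RInt_gamma_integrand_le a b : 0 < a -> a <= b -> RInt gamma_integrand a b <= 2 / e.
Proof.
  intros Ha Hab.
  assert (Hg : is_RInt majorant a b (minus (majorant_primitive b) (majorant_primitive a))).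
  { apply (is_RInt_derive (V := R_CompleteNormedModule)); intros x Hx;
      rewrite Rmin_left, Rmax_right in Hx by lra.
    - apply majorant_primitive_derive; lra.
    - apply majorant_cont; lra. }
  assert (Hle : RInt gamma_integrand a b <= RInt majorant a b).
  { apply RInt_le; auto.
    - apply (ex_RInt_pos _ gamma_integrand_cont); auto.
    - eexists; exact Hg.
    - intros x Hx. apply gamma_integrand_le_majorant; lra. }
  rewrite (is_RInt_unique _ _ _ _ Hg) in Hle.
  assert (H1 := majorant_primitive_bounds a Ha). assert (H2 := majorant_primitive_bounds b ltac:(lra)).
  unfold minus, plus, opp in Hle. simpl in Hle. lra.
Qed.

Lemma Gamma_pos_le : 0 < Gamma e <= 2 / e.
Proof.
  assert (Hcont := gamma_integrand_cont).
  assert (Hge0 : forall t, 0 < t -> 0 <= gamma_integrand t) by (intros t Ht; left; apply gamma_integrand_pos; auto).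
  destruct (is_RInt_gen_pos_bounded gamma_integrand Hcont Hge0 (2 / e)) as [l [Hl [HlM Hle]]].
  { intros a b Hab. apply RInt_gamma_integrand_le; lra. }
  assert (HG : Gamma e = l).
  { unfold Gamma. apply (is_RInt_gen_unique (V := R_CompleteNormedModule)). exact Hl. }
  rewrite HG. split; auto.
  assert (0 < RInt gamma_integrand 1 2).
  { apply RInt_gt_0; [lra | intros; apply gamma_integrand_pos; lra | intros; apply Hcont; lra]. }
  assert (RInt gamma_integrand 1 2 <= l) by (apply Hle; lra). lra.
Qed.

End GammaBound.

(** * The difference [S_eps - S_0] *)

Definition phi (e : R) (w : C) : R := Rpower (Cmod w) (-(2 * e)) - 1.

Definition phi_quot (e : R) (w : C) : C := Cdiv (RtoC (phi e w)) w.

Definition remainder (e : R) (w : C) : C :=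
  Cminus (Cdiv (RtoC (phi e w)) (Cmult (Cmult w w) (Cplus w (RtoC 1))))
         (Cdiv (Cminus (RtoC (phi e w)) (RtoC (phi e (Cplus w (RtoC 1))))) (Cplus w (RtoC 1))).

Lemma Sterm_sub_Sterm_0 e w : w <> RtoC 0 -> Cplus w (RtoC 1) <> RtoC 0 ->
  Cminus (Sterm e w) (Sterm 0 w) =
  Cplus (Cminus (remainder e w) (phi_quot e (Cplus w (RtoC 1)))) (phi_quot e w).
Proof.
  intros H0 H1. rewrite !Sterm_eq_div by auto.
  rewrite Rmult_0_r, Ropp_0, Rpower_0_r.
  unfold remainder, phi_quot, phi. rewrite !RtoC_minus.
  field. auto.
Qed.

Lemma Rabs_phi_le y0 e r : 0 < y0 -> 0 < e <= 1/4 -> y0 <= r ->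
  Rabs (Rpower r (-(2 * e)) - 1) <= e * (4 * (2 + / y0)) * (Rpower r (1/2) + Rpower r (-(1/2))).
Proof.
  intros Hy0 He Hr.
  assert (H := exp_diff_le (-(2 * e) * ln r) 0).
  rewrite exp_0 in H. fold (Rpower r (-(2 * e))) in H.
  rewrite Rminus_0_r, Rabs_mult, Rabs_Ropp, (Rabs_pos_eq (2 * e)) in H by lra.
  assert (Hl := ln_abs_le r ltac:(lra)).
  assert (Hb := Rpower_le_1_plus_inv r (-(2 * e)) ltac:(lra) ltac:(lra)).
  assert (Hi : / r <= / y0) by (apply Rinv_le_contravar; lra).
  assert (0 <= Rabs (ln r)) by apply Rabs_pos.
  assert (0 < Rpower r (1/2)) by apply Rpower_pos.
  assert (0 < Rpower r (-(1/2))) by apply Rpower_pos.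
  eapply Rle_trans; [exact H|].
  assert (2 * e * Rabs (ln r) * (Rpower r (- (2 * e)) + 1)
          <= 2 * e * (2 * (Rpower r (1 / 2) + Rpower r (- (1 / 2)))) * (2 + / y0)).
  { assert (0 < Rpower r (-(2 * e))) by apply Rpower_pos.
    apply Rmult_le_compat; nra. }
  nra.
Qed.

Lemma Rabs_Rpower_sub_le e c r r' : 0 < e <= 1/4 -> 0 < c <= 1 -> 0 < r -> c * r <= r' -> Rabs (r - r') <= 1 ->
  Rabs (Rpower r (-(2 * e)) - Rpower r' (-(2 * e))) <= e * (2 * (1 + / c) / c) * (Rpower r (-(2 * e)) / r).
Proof.
  intros He Hc Hr Hr' Hd.
  assert (Hcr : 0 < c * r) by nra.
  assert (H := exp_diff_le (-(2 * e) * ln r) (-(2 * e) * ln r')).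
  fold (Rpower r (-(2 * e))) (Rpower r' (-(2 * e))) in H.
  replace (-(2 * e) * ln r - -(2 * e) * ln r') with (-(2 * e) * (ln r - ln r')) in H by ring.
  rewrite Rabs_mult, Rabs_Ropp, (Rabs_pos_eq (2 * e)) in H by lra.
  assert (Hmin : c * r <= Rmin r r') by (apply Rmin_glb; nra).
  assert (Hl : Rabs (ln r - ln r') <= / (c * r)).
  { eapply Rle_trans; [apply ln_diff_le; lra|]. unfold Rdiv.
    assert (/ Rmin r r' <= / (c * r)) by (apply Rinv_le_contravar; lra).
    assert (0 <= / Rmin r r') by (left; apply Rinv_0_lt_compat; lra).
    nra. }
  assert (Hr2 : Rpower r' (-(2 * e)) <= / c * Rpower r (-(2 * e))).
  { eapply Rle_trans; [apply Rle_Rpower_l_nonpos with (a := c * r); lra|].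
    rewrite <- Rpower_mult_distr by lra.
    assert (Rpower c (-(2 * e)) <= / c).
    { rewrite <- Rpower_inv_base by lra.
      rewrite <- (Rpower_1 (/ c)) at 2 by (apply Rinv_0_lt_compat; lra).
      apply Rle_Rpower; [|lra]. rewrite <- Rinv_1. apply Rinv_le_contravar; lra. }
    assert (0 < Rpower r (-(2 * e))) by apply Rpower_pos. nra. }
  assert (0 < Rpower r (-(2 * e))) by apply Rpower_pos.
  assert (0 < Rpower r' (-(2 * e))) by apply Rpower_pos.
  assert (0 <= Rabs (ln r - ln r')) by apply Rabs_pos.
  eapply Rle_trans; [exact H|].
  replace (e * (2 * (1 + / c) / c) * (Rpower r (- (2 * e)) / r))
    with (2 * e * / (c * r) * ((1 + / c) * Rpower r (- (2 * e)))) by (field; lra).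
  apply Rmult_le_compat; nra.
Qed.

Section Difference.

Variable y0 : R.
Hypothesis hy0 : 0 < y0.

Let c0 := y0 / (2 * (1 + y0)).
Let K1 := 4 * (2 + / y0) / c0.
Let K2 := 2 * (1 + / c0) / (c0 * c0).

Lemma c0_bounds : 0 < c0 <= 1.
Proof. unfold c0. split; [apply Rdiv_lt_0_compat; lra|]. apply Rle_div_l; lra. Qed.

Lemma K1_pos : 0 < K1.
Proof.
  destruct c0_bounds. assert (0 < / y0) by (apply Rinv_0_lt_compat; lra).
  apply Rdiv_lt_0_compat; lra.
Qed.

Lemma K2_pos : 0 < K2.
Proof.
  destruct c0_bounds. assert (0 < / c0) by (apply Rinv_0_lt_compat; lra).
  apply Rdiv_lt_0_compat; nra.
Qed.

Lemma c0_Cmod_le_Cmod_succ w : y0 <= Rabs (Im w) -> c0 * Cmod w <= Cmod (Cplus w (RtoC 1)).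
Proof.
  intros Hw.
  assert (Hr : y0 <= Cmod w) by (eapply Rle_trans; [exact Hw | apply Cmod_im_le]).
  assert (Hr1 : Cmod w - 1 <= Cmod (Cplus w (RtoC 1))).
  { assert (H := Cmod_triangle (Cplus w (RtoC 1)) (Copp (RtoC 1))).
    replace (Cplus (Cplus w (RtoC 1)) (Copp (RtoC 1))) with w in H by ring.
    rewrite Cmod_opp, Cmod_R, Rabs_R1 in H. lra. }
  assert (Hr0 : y0 <= Cmod (Cplus w (RtoC 1))).
  { eapply Rle_trans; [|apply Cmod_im_le]. rewrite Im_Cplus_RtoC. exact Hw. }
  destruct c0_bounds as [Hc1 Hc2].
  destruct (Rle_dec 2 (Cmod w)).
  - assert (c0 <= 1/2) by (unfold c0; apply Rle_div_l; lra). nra.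
  - assert (c0 * 2 <= y0).
    { unfold c0. replace (y0 / (2 * (1 + y0)) * 2) with (y0 / (1 + y0)) by (field; lra).
      apply Rle_div_l; nra. }
    nra.
Qed.

Lemma Cmod_remainder_le e w : 0 < e <= 1/4 -> y0 <= Rabs (Im w) ->
  Cmod (remainder e w) <=
  e * (K1 * (Rpower (Cmod w) (-(5/2)) + Rpower (Cmod w) (-(7/2))) + K2 * Rpower (Cmod w) (-(2 + 2 * e))).
Proof.
  intros He Hw.
  set (r := Cmod w). set (r' := Cmod (Cplus w (RtoC 1))).
  assert (Hr : y0 <= r) by (eapply Rle_trans; [exact Hw | apply Cmod_im_le]).
  assert (Hcr := c0_Cmod_le_Cmod_succ w Hw). fold r r' in Hcr.
  destruct c0_bounds as [Hc1 Hc2].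
  assert (Hd : Rabs (r - r') <= 1).
  { assert (H := Cmod_triangle w (RtoC 1)). assert (H' := Cmod_triangle (Cplus w (RtoC 1)) (Copp (RtoC 1))).
    replace (Cplus (Cplus w (RtoC 1)) (Copp (RtoC 1))) with w in H' by ring.
    rewrite Cmod_R, Rabs_R1 in H. rewrite Cmod_opp, Cmod_R, Rabs_R1 in H'.
    fold r r' in H, H'. apply Rabs_le; lra. }
  assert (Hw0 : w <> RtoC 0) by (intros E; unfold r in Hr; rewrite E, Cmod_0 in Hr; lra).
  assert (Hw1 : Cplus w (RtoC 1) <> RtoC 0) by (intros E; unfold r' in Hcr; rewrite E, Cmod_0 in Hcr; nra).
  unfold remainder. eapply Rle_trans; [apply Cmod_triangle|]. rewrite Cmod_opp.
  rewrite !Cmod_div by auto using Cmult_neq_0.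
  rewrite !Cmod_mult, <- RtoC_minus, !Cmod_R. fold r r'. unfold phi. fold r r'.
  assert (P1 := Rabs_phi_le y0 e r hy0 He Hr).
  assert (P2 := Rabs_Rpower_sub_le e c0 r r' He (conj Hc1 Hc2) ltac:(lra) Hcr Hd).
  assert (Hr3 : 0 < r * r * r) by (repeat apply Rmult_lt_0_compat; lra).
  replace (-(5/2)) with (1/2 - INR 3) by (simpl; field).
  replace (-(7/2)) with (-(1/2) - INR 3) by (simpl; field).
  replace (-(2 + 2 * e)) with (-(2 * e) - INR 2) by (simpl; ring).
  rewrite !Rpower_sub_nat by lra. simpl pow. rewrite !Rmult_1_r.
  assert (T1 : Rabs (Rpower r (- (2 * e)) - 1) / (r * r * r') <=
     e * K1 * (Rpower r (1/2) / (r * (r * r)) + Rpower r (-(1/2)) / (r * (r * r)))).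
  { apply Rle_trans with (Rabs (Rpower r (- (2 * e)) - 1) / (c0 * (r * r * r))).
    - unfold Rdiv. apply Rmult_le_compat_l; [apply Rabs_pos|]. apply Rinv_le_contravar; nra.
    - apply Rle_div_l; [nra|]. eapply Rle_trans; [exact P1|]. unfold K1. right. field. lra. }
  assert (T2 : Rabs (Rpower r (- (2 * e)) - Rpower r' (- (2 * e))) / r' <=
     e * K2 * (Rpower r (- (2 * e)) / (r * r))).
  { apply Rle_trans with (Rabs (Rpower r (- (2 * e)) - Rpower r' (- (2 * e))) / (c0 * r)).
    - unfold Rdiv. apply Rmult_le_compat_l; [apply Rabs_pos|]. apply Rinv_le_contravar; nra.
    - apply Rle_div_l; [nra|]. eapply Rle_trans; [exact P2|]. unfold K2. right. field. lra. }
  replace (Rpower r (- (2 * e)) - 1 - (Rpower r' (- (2 * e)) - 1))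
    with (Rpower r (- (2 * e)) - Rpower r' (- (2 * e))) by ring.
  lra.
Qed.

Lemma lattice_exponents_le e Y : 0 < e <= 1/4 -> y0 <= Y ->
  Rpower Y (1 - 5/2) + Rpower Y (1 - 7/2) <= (1 + / y0) * (1 + / y0) * Rpower Y (-1 - 2 * e).
Proof.
  intros He HY.
  assert (Hi : 0 < / y0) by (apply Rinv_0_lt_compat; lra).
  assert (HiY : / Y <= / y0) by (apply Rinv_le_contravar; lra).
  assert (H1 : Rpower Y (1 - 5/2) <= (1 + / y0) * Rpower Y (-1 - 2 * e)).
  { replace (1 - 5/2) with ((-1 - 2 * e) + (2 * e - 1/2)) by field. rewrite Rpower_plus.
    assert (0 < Rpower Y (-1 - 2 * e)) by apply Rpower_pos.
    assert (Rpower Y (2 * e - 1/2) <= 1 + / Y) by (apply Rpower_le_1_plus_inv; lra).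
    nra. }
  assert (H2 : Rpower Y (1 - 7/2) <= / y0 * Rpower Y (1 - 5/2)).
  { replace (1 - 7/2) with ((1 - 5/2) + - (1)) by field. rewrite Rpower_plus, Rpower_Ropp, Rpower_1 by lra.
    assert (0 < Rpower Y (1 - 5/2)) by apply Rpower_pos. nra. }
  assert (0 < Rpower Y (-1 - 2 * e)) by apply Rpower_pos.
  assert (0 < Rpower Y (1 - 5/2)) by apply Rpower_pos.
  nra.
Qed.

Definition remainder_pair (e : R) (z : C) (n : nat) : C :=
  Cplus (remainder e (Cplus z (RtoC (INR n)))) (remainder e (Cminus z (RtoC (INR n + 1)))).

Lemma csum_telescope (a : nat -> C) N :
  csum (fun n => Cminus (a (Datatypes.S n)) (a n)) N = Cminus (a N) (a 0%nat).
Proof. induction N; simpl; [ring | rewrite IHN; ring]. Qed.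

Lemma Spair_sub_Spair_0 e z n : Im z <> 0 ->
  Cminus (Spair e z n) (Spair 0 z n) =
  Cplus (remainder_pair e z n)
    (Cminus (Cminus (phi_quot e (Cplus z (RtoC (-1 * INR (Datatypes.S n))))) (phi_quot e (Cplus z (RtoC (-1 * INR n)))))
            (Cminus (phi_quot e (Cplus z (RtoC (1 * INR (Datatypes.S n))))) (phi_quot e (Cplus z (RtoC (1 * INR n)))))).
Proof.
  intros Hy. unfold Spair, remainder_pair.
  assert (E1 := Sterm_sub_Sterm_0 e (Cplus z (RtoC (INR n)))
                  (Cplus_RtoC_neq_0 _ _ Hy) ltac:(rewrite <- Cplus_assoc, <- RtoC_plus; apply Cplus_RtoC_neq_0, Hy)).
  assert (E2 := Sterm_sub_Sterm_0 e (Cminus z (RtoC (INR n + 1)))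
                  (Cminus_RtoC_neq_0 _ _ Hy) ltac:(apply Cplus_RtoC_neq_0; rewrite Im_Cminus_RtoC; exact Hy)).
  replace (Cplus (Cplus z (RtoC (INR n))) (RtoC 1)) with (Cplus z (RtoC (1 * INR (Datatypes.S n)))) in E1
    by (rewrite S_INR; solve_C_eq).
  replace (Cplus (Cminus z (RtoC (INR n + 1))) (RtoC 1)) with (Cplus z (RtoC (-1 * INR n))) in E2 by solve_C_eq.
  replace (phi_quot e (Cplus z (RtoC (INR n)))) with (phi_quot e (Cplus z (RtoC (1 * INR n)))) in E1
    by (f_equal; solve_C_eq).
  replace (phi_quot e (Cminus z (RtoC (INR n + 1)))) with (phi_quot e (Cplus z (RtoC (-1 * INR (Datatypes.S n))))) in E2
    by (f_equal; rewrite S_INR; solve_C_eq).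
  transitivity (Cplus (Cminus (Sterm e (Cplus z (RtoC (INR n)))) (Sterm 0 (Cplus z (RtoC (INR n)))))
                      (Cminus (Sterm e (Cminus z (RtoC (INR n + 1)))) (Sterm 0 (Cminus z (RtoC (INR n + 1)))))).
  - ring.
  - rewrite E1, E2. ring.
Qed.

Lemma Cmod_phi_quot_le e w : 0 <= e -> 1 <= Cmod w -> Cmod (phi_quot e w) <= 2 / Cmod w.
Proof.
  intros He Hw. unfold phi_quot, phi.
  assert (Hw0 : w <> RtoC 0) by (intros E; rewrite E, Cmod_0 in Hw; lra).
  rewrite Cmod_div, Cmod_R by auto. unfold Rdiv. apply Rmult_le_compat_r; [left; apply Rinv_0_lt_compat; lra|].
  assert (Rpower (Cmod w) (-(2 * e)) <= 1) by (apply Rpower_nonpos_le_1; lra).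
  assert (0 < Rpower (Cmod w) (-(2 * e))) by apply Rpower_pos.
  apply Rabs_le. lra.
Qed.

Lemma is_Clim_seq_remainder_pair e z le l0 : 0 <= e -> Im z <> 0 ->
  @is_series C_AbsRing C_NormedModule (Spair e z) le ->
  @is_series C_AbsRing C_NormedModule (Spair 0 z) l0 ->
  is_Clim_seq (csum (remainder_pair e z)) (Cminus le l0).
Proof.
  intros He Hy Hle Hl0. rewrite is_series_csum in Hle, Hl0.
  set (a := fun n => phi_quot e (Cplus z (RtoC (-1 * INR n)))).
  set (b := fun n => phi_quot e (Cplus z (RtoC (1 * INR n)))).
  assert (Htail : forall sg, (sg = 1 \/ sg = -1) ->
            is_Clim_seq (fun N => phi_quot e (Cplus z (RtoC (sg * INR N)))) (RtoC 0)).
  { intros sg Hsg. apply (is_Clim_seq_tail _ 2); auto; [lra|]. intros w Hw. apply Cmod_phi_quot_le; auto. }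
  assert (Hab := is_Clim_seq_minus a b _ _ (Htail (-1) ltac:(auto)) (Htail 1 ltac:(auto))).
  assert (Hd := is_Clim_seq_minus _ _ _ _ (is_Clim_seq_minus _ _ _ _ Hle Hl0) Hab).
  replace (Cminus le l0) with (Cminus (Cminus le l0) (Cminus (RtoC 0) (RtoC 0))) by ring.
  eapply is_Clim_seq_ext; [|exact Hd]. intros N. cbv beta.
  rewrite <- csum_minus, (csum_ext _ _ N (fun n => Spair_sub_Spair_0 e z n Hy)).
  rewrite csum_plus, csum_minus, (csum_telescope a), (csum_telescope b).
  replace (a 0%nat) with (b 0%nat) by (unfold a, b; f_equal; solve_C_eq). ring.
Qed.

Lemma Cmod_remainder_pair_le e z n : 0 < e <= 1/4 -> 0 <= Re z < 1 -> y0 <= Rabs (Im z) ->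
  let rho := sqrt (INR n ^ 2 + Rabs (Im z) ^ 2) in
  Cmod (remainder_pair e z n) <=
  2 * e * (K1 * (Rpower rho (-(5/2)) + Rpower rho (-(7/2))) + K2 * Rpower rho (-(2 + 2 * e))).
Proof.
  intros He Hx HY rho.
  assert (Hrho : 0 < rho) by (apply lattice_norm_pos; lra).
  assert (HK1 := K1_pos). assert (HK2 := K2_pos).
  assert (Hw : forall w, y0 <= Rabs (Im w) -> rho <= Cmod w ->
            Cmod (remainder e w) <=
            e * (K1 * (Rpower rho (-(5/2)) + Rpower rho (-(7/2))) + K2 * Rpower rho (-(2 + 2 * e)))).
  { intros w Hw Hrw. eapply Rle_trans; [apply Cmod_remainder_le; auto|].
    assert (Rpower (Cmod w) (-(5/2)) <= Rpower rho (-(5/2))) by (apply Rle_Rpower_l_nonpos; lra).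
    assert (Rpower (Cmod w) (-(7/2)) <= Rpower rho (-(7/2))) by (apply Rle_Rpower_l_nonpos; lra).
    assert (Rpower (Cmod w) (-(2 + 2 * e)) <= Rpower rho (-(2 + 2 * e))) by (apply Rle_Rpower_l_nonpos; lra).
    apply Rmult_le_compat_l; [lra|]. nra. }
  unfold remainder_pair. eapply Rle_trans; [apply Cmod_triangle|].
  assert (B1 := Hw _ ltac:(rewrite Im_Cplus_RtoC; exact HY) (sqrt_le_Cmod_add_nat z n Hx)).
  assert (B2 := Hw _ ltac:(rewrite Im_Cminus_RtoC; exact HY) (sqrt_le_Cmod_sub_succ z n Hx)).
  lra.
Qed.

Let Cdiff := 2 * (16 * (1 + / y0)) * (K1 * ((1 + / y0) * (1 + / y0)) + K2).

Lemma Cdiff_pos : 0 < Cdiff.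
Proof.
  assert (HK1 := K1_pos). assert (HK2 := K2_pos).
  assert (0 < / y0) by (apply Rinv_0_lt_compat; lra).
  assert (0 < K1 * ((1 + / y0) * (1 + / y0))) by (apply Rmult_lt_0_compat; nra).
  unfold Cdiff. apply Rmult_lt_0_compat; lra.
Qed.

Lemma Cmod_S_sub_S_0_strip e z : 0 < e <= 1/4 -> 0 <= Re z < 1 -> y0 <= Rabs (Im z) ->
  Cmod (Cminus (S e z) (S 0 z)) <= e * Cdiff * Rpower (Rabs (Im z)) (-1 - 2 * e).
Proof.
  intros He Hx HY.
  assert (Hy : Im z <> 0) by (intros E; rewrite E, Rabs_R0 in HY; lra).
  destruct (is_series_Spair_strip y0 e z hy0 ltac:(lra) Hx HY) as [le [Hle _]].
  destruct (is_series_Spair_strip y0 0 z hy0 ltac:(lra) Hx HY) as [l0 [Hl0 _]].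
  rewrite (S_eq_of_is_series _ _ _ Hle), (S_eq_of_is_series _ _ _ Hl0).
  set (Y := Rabs (Im z)) in *.
  set (lat := fun a n => Rpower (sqrt (INR n ^ 2 + Y ^ 2)) (- a)).
  apply (is_Clim_seq_csum_norm_le (remainder_pair e z) _
           (fun n => 2 * e * (K1 * (lat (5/2) n + lat (7/2) n) + K2 * lat (2 + 2 * e) n))).
  - apply is_Clim_seq_remainder_pair; auto; lra.
  - intros n. apply Cmod_remainder_pair_le; auto.
  - intros N.
    rewrite rsum_scal, rsum_plus, rsum_scal, rsum_plus, !rsum_scal.
    assert (Sa := lattice_sum_le y0 (5/2) Y N hy0 ltac:(lra) HY).
    assert (Sb := lattice_sum_le y0 (7/2) Y N hy0 ltac:(lra) HY).
    assert (Sc := lattice_sum_le y0 (2 + 2 * e) Y N hy0 ltac:(lra) HY).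
    replace (1 - (2 + 2 * e)) with (-1 - 2 * e) in Sc by ring.
    fold (lat (5/2)) (lat (7/2)) (lat (2 + 2 * e)) in Sa, Sb, Sc.
    assert (Yp := lattice_exponents_le e Y He HY).
    assert (HK1 := K1_pos). assert (HK2 := K2_pos).
    assert (Hi : 0 < / y0) by (apply Rinv_0_lt_compat; lra).
    assert (0 < Rpower Y (-1 - 2 * e)) by apply Rpower_pos.
    set (M := 16 * (1 + / y0)) in *.
    assert (HM : 0 < M) by (unfold M; lra).
    assert (rsum (lat (5/2)) N + rsum (lat (7/2)) N <= M * ((1 + / y0) * (1 + / y0) * Rpower Y (-1 - 2 * e))) by nra.
    assert (K1 * (rsum (lat (5/2)) N + rsum (lat (7/2)) N)
            <= K1 * (M * ((1 + / y0) * (1 + / y0) * Rpower Y (-1 - 2 * e)))) by (apply Rmult_le_compat_l; lra).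
    assert (K2 * rsum (lat (2 + 2 * e)) N <= K2 * (M * Rpower Y (-1 - 2 * e))) by (apply Rmult_le_compat_l; lra).
    unfold Cdiff. fold M. nra.
Qed.

Lemma Cmod_S_sub_S_0_le : exists C, 0 < C /\ forall e z, 0 < e <= 1/4 -> y0 <= Rabs (Im z) ->
  Cmod (Cminus (S e z) (S 0 z)) <= e * C * Rpower (Rabs (Im z)) (-1 - 2 * e).
Proof.
  exists Cdiff. split; [apply Cdiff_pos|]. intros e z He HY.
  assert (Hy : Im z <> 0) by (intros E; rewrite E, Rabs_R0 in HY; lra).
  destruct (S_translate_into_strip z Hy) as [z0 [Hi [Hr HS]]].
  rewrite (HS e ltac:(lra)), (HS 0 ltac:(lra)), <- Hi.
  apply Cmod_S_sub_S_0_strip; auto. rewrite Hi. exact HY.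
Qed.

End Difference.

Definition Cexp (u : C) : C := (exp (Re u) * cos (Im u), exp (Re u) * sin (Im u)).

Lemma Rabs_le_of_derive_le (f df : R -> R) (k : nat) (be t : R) :
  f 0 = 0 -> (forall s, is_derive f s (df s)) ->
  (forall s, 0 <= s <= 1 -> Rabs (df s) <= be * s ^ k) -> 0 <= t <= 1 ->
  Rabs (f t) <= be * t ^ (k + 1).
Proof.
  intros H0 Hd Hb Ht.
  assert (Hbe : 0 <= be) by (specialize (Hb 1 ltac:(lra)); rewrite pow1 in Hb; assert (H := Rabs_pos (df 1)); lra).
  destruct (Req_dec t 0) as [E|E].
  - subst. rewrite H0, Rabs_R0, pow_i by lia. lra.
  - destruct (MVT_cor2 f df 0 t ltac:(lra)) as [c [Hc1 Hc2]].
    { intros c _. apply is_derive_Reals. apply Hd. }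
    rewrite H0, !Rminus_0_r in Hc1. rewrite Hc1, Rabs_mult, (Rabs_pos_eq t), pow_add, pow_1 by lra.
    specialize (Hb c ltac:(lra)).
    assert (c ^ k <= t ^ k) by (apply pow_incr; lra).
    assert (0 <= c ^ k) by (apply pow_le; lra).
    assert (Rabs (df c) <= be * t ^ k) by nra.
    assert (0 <= Rabs (df c)) by apply Rabs_pos. nra.
Qed.

Lemma Cmod_le_of_derive_le (G dG : R -> C) (k : nat) (be : R) :
  G 0 = RtoC 0 ->
  (forall t, is_derive (fun s => Re (G s)) t (Re (dG t))) ->
  (forall t, is_derive (fun s => Im (G s)) t (Im (dG t))) ->
  (forall t, 0 <= t <= 1 -> Cmod (dG t) <= be * t ^ k) ->
  forall t, 0 <= t <= 1 -> Cmod (G t) <= 2 * be * t ^ (k + 1).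
Proof.
  intros H0 Hd1 Hd2 Hb t Ht.
  eapply Rle_trans; [apply Cmod_le_abs_re_im|].
  assert (A1 : Rabs (Re (G t)) <= be * t ^ (k + 1)).
  { apply (Rabs_le_of_derive_le (fun s => Re (G s)) (fun s => Re (dG s))); auto.
    - rewrite H0. reflexivity.
    - intros s Hs. eapply Rle_trans; [apply Cmod_re_le|]. apply Hb; auto. }
  assert (A2 : Rabs (Im (G t)) <= be * t ^ (k + 1)).
  { apply (Rabs_le_of_derive_le (fun s => Im (G s)) (fun s => Im (dG s))); auto.
    - rewrite H0. reflexivity.
    - intros s Hs. eapply Rle_trans; [apply Cmod_im_le|]. apply Hb; auto. }
  lra.
Qed.

Section CexpTaylor.

Variables a b : R.

(* [taylor_rem k t] is [exp (t u)] minus its Taylor polynomial of degree [k - 1]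
   in [t], for [u = a + i b]; its derivative is [u * taylor_rem (k - 1) t]. *)
Let u : C := (a, b).
Let taylor_rem0 (t : R) : C := (exp (t * a) * cos (t * b), exp (t * a) * sin (t * b)).
Let taylor_rem1 (t : R) : C := (exp (t * a) * cos (t * b) - 1, exp (t * a) * sin (t * b)).
Let taylor_rem2 (t : R) : C :=
  (exp (t * a) * cos (t * b) - 1 - t * a, exp (t * a) * sin (t * b) - t * b).
Let taylor_rem3 (t : R) : C :=
  (exp (t * a) * cos (t * b) - 1 - t * a - t ^ 2 * (a ^ 2 - b ^ 2) / 2,
   exp (t * a) * sin (t * b) - t * b - t ^ 2 * a * b).

Lemma Cmod_taylor_rem0_le t : 0 <= t <= 1 -> Cmod (taylor_rem0 t) <= exp (Cmod u) * t ^ 0.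
Proof.
  intros Ht. rewrite pow_O, Rmult_1_r.
  assert (Hsc := sin2_cos2 (t * b)). unfold Rsqr in Hsc.
  assert (E : (exp (t * a) * cos (t * b)) ^ 2 + (exp (t * a) * sin (t * b)) ^ 2 = exp (t * a) ^ 2).
  { rewrite <- (Rmult_1_r (exp (t * a) ^ 2)), <- Hsc. ring. }
  unfold taylor_rem0. rewrite Cmod_pair, E, sqrt_pow2 by (left; apply exp_pos).
  apply exp_le_compat.
  assert (H : Rabs a <= Cmod u) by apply (Cmod_re_le u).
  assert (a <= Rabs a) by apply Rle_abs. assert (- a <= Rabs a) by (rewrite <- Rabs_Ropp; apply Rle_abs).
  nra.
Qed.

Lemma Cmod_taylor_rem1_le t : 0 <= t <= 1 -> Cmod (taylor_rem1 t) <= 2 * (Cmod u * exp (Cmod u)) * t ^ (0 + 1).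
Proof.
  apply (Cmod_le_of_derive_le taylor_rem1 (fun t => Cmult u (taylor_rem0 t)) 0).
  - unfold taylor_rem1. rewrite !Rmult_0_l, exp_0, cos_0, sin_0. solve_C_eq.
  - intros s. unfold taylor_rem1, taylor_rem0, u, Re; simpl. auto_derive; auto. ring.
  - intros s. unfold taylor_rem1, taylor_rem0, u, Im; simpl. auto_derive; auto. ring.
  - intros s Hs. rewrite Cmod_mult. assert (H := Cmod_taylor_rem0_le s Hs).
    assert (0 <= Cmod u) by apply Cmod_ge_0. simpl in *. nra.
Qed.

Lemma Cmod_taylor_rem2_le t : 0 <= t <= 1 ->
  Cmod (taylor_rem2 t) <= 2 * (Cmod u * (2 * (Cmod u * exp (Cmod u)))) * t ^ (1 + 1).
Proof.
  apply (Cmod_le_of_derive_le taylor_rem2 (fun t => Cmult u (taylor_rem1 t)) 1).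
  - unfold taylor_rem2. rewrite !Rmult_0_l, exp_0, cos_0, sin_0. solve_C_eq.
  - intros s. unfold taylor_rem2, taylor_rem1, u, Re; simpl. auto_derive; auto. ring.
  - intros s. unfold taylor_rem2, taylor_rem1, u, Im; simpl. auto_derive; auto. ring.
  - intros s Hs. rewrite Cmod_mult. assert (H := Cmod_taylor_rem1_le s Hs).
    assert (0 <= Cmod u) by apply Cmod_ge_0. simpl in *. nra.
Qed.

Lemma Cmod_taylor_rem3_le t : 0 <= t <= 1 ->
  Cmod (taylor_rem3 t) <= 2 * (Cmod u * (2 * (Cmod u * (2 * (Cmod u * exp (Cmod u)))))) * t ^ (2 + 1).
Proof.
  apply (Cmod_le_of_derive_le taylor_rem3 (fun t => Cmult u (taylor_rem2 t)) 2).
  - unfold taylor_rem3. rewrite !Rmult_0_l, exp_0, cos_0, sin_0. apply injective_projections; simpl; field.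
  - intros s. unfold taylor_rem3, taylor_rem2, u, Re; simpl. auto_derive; auto. field.
  - intros s. unfold taylor_rem3, taylor_rem2, u, Im; simpl. auto_derive; auto. field.
  - intros s Hs. rewrite Cmod_mult. assert (H := Cmod_taylor_rem2_le s Hs).
    assert (0 <= Cmod u) by apply Cmod_ge_0. simpl in *. nra.
Qed.

Lemma Cmod_Cexp_taylor_le :
  Cmod (Cminus (Cminus (Cminus (Cexp u) (RtoC 1)) u) (Cmult (Cmult u u) (RtoC (/ 2))))
  <= 8 * Cmod u ^ 3 * exp (Cmod u).
Proof.
  assert (H := Cmod_taylor_rem3_le 1 ltac:(lra)).
  replace (Cminus (Cminus (Cminus (Cexp u) (RtoC 1)) u) (Cmult (Cmult u u) (RtoC (/ 2)))) with (taylor_rem3 1).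
  - eapply Rle_trans; [exact H|]. simpl. lra.
  - unfold Cexp, taylor_rem3, u, Re, Im. apply injective_projections; simpl; rewrite !Rmult_1_l; field.
Qed.

End CexpTaylor.

(** * The closed form of [S_0] *)

Lemma PI_bounds : 3 < PI <= 4.
Proof. split; [assert (H := PI2_3_2); lra | apply PI_4]. Qed.

Definition two_pi_i_mul (z : C) : C := (- (2 * PI) * Im z, 2 * PI * Re z).

Definition qexp (z : C) : C := Cexp (two_pi_i_mul z).

(* [pi^2 / sin^2 (pi z)], written in terms of [q = exp (2 pi i z)]. *)
Definition pi_csc_sq (z : C) : C :=
  Cmult (RtoC (- (4 * PI ^ 2)))
        (Cdiv (qexp z) (Cmult (Cminus (RtoC 1) (qexp z)) (Cminus (RtoC 1) (qexp z)))).

Definition Chalf (z : C) : C := Cmult (RtoC (/ 2)) z.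

Lemma qexp_eq z : qexp z =
  (exp (- (2 * PI) * Im z) * cos (2 * PI * Re z), exp (- (2 * PI) * Im z) * sin (2 * PI * Re z)).
Proof. reflexivity. Qed.

Lemma Chalf_eq z : Chalf z = (/ 2 * Re z, / 2 * Im z).
Proof. unfold Chalf, Re, Im. solve_C_eq. Qed.

Lemma Cmod_qexp z : Cmod (qexp z) = exp (- (2 * PI) * Im z).
Proof.
  rewrite qexp_eq, Cmod_pair.
  assert (Hsc := sin2_cos2 (2 * PI * Re z)). unfold Rsqr in Hsc.
  set (E := exp (- (2 * PI) * Im z)).
  replace ((E * cos (2 * PI * Re z)) ^ 2 + (E * sin (2 * PI * Re z)) ^ 2) with (E ^ 2)
    by (rewrite <- (Rmult_1_r (E ^ 2)), <- Hsc; ring).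
  apply sqrt_pow2. left; apply exp_pos.
Qed.

Lemma Rabs_1_sub_Cmod_le (q : C) : Rabs (1 - Cmod q) <= Cmod (Cminus (RtoC 1) q).
Proof.
  assert (H1 := Cmod_triangle (Cminus (RtoC 1) q) q).
  assert (H2 := Cmod_triangle (Copp (Cminus (RtoC 1) q)) (RtoC 1)).
  replace (Cplus (Cminus (RtoC 1) q) q) with (RtoC 1) in H1 by ring.
  replace (Cplus (Copp (Cminus (RtoC 1) q)) (RtoC 1)) with q in H2 by ring.
  rewrite Cmod_R, Rabs_R1 in H1, H2. rewrite Cmod_opp in H2.
  apply Rabs_le. lra.
Qed.

Lemma one_sub_qexp_neq_0 z : Im z <> 0 -> Cminus (RtoC 1) (qexp z) <> RtoC 0.
Proof.
  intros Hy E. assert (H := Rabs_1_sub_Cmod_le (qexp z)). rewrite E, Cmod_0, Cmod_qexp in H.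
  assert (exp (- (2 * PI) * Im z) <> 1).
  { rewrite <- exp_0. intros E2. apply exp_inv in E2. assert (PI > 0) by apply PI_RGT_0. apply Hy. nra. }
  assert (Rabs (1 - exp (- (2 * PI) * Im z)) > 0) by (apply Rabs_pos_lt; lra).
  lra.
Qed.

Lemma Cmod_pi_csc_sq_le z : Im z <> 0 ->
  Cmod (pi_csc_sq z) <= 4 * PI ^ 2 * (exp (- (2 * PI) * Rabs (Im z)) / (1 - exp (- (2 * PI) * Rabs (Im z))) ^ 2).
Proof.
  intros Hy. unfold pi_csc_sq.
  assert (Hne := one_sub_qexp_neq_0 z Hy).
  assert (HPI : PI > 0) by apply PI_RGT_0.
  rewrite Cmod_mult, Cmod_div, Cmod_mult, Cmod_R, Cmod_qexp, Rabs_Ropp, Rabs_pos_eq by (auto using Cmult_neq_0; nra).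
  assert (H1 := Rabs_1_sub_Cmod_le (qexp z)). rewrite Cmod_qexp in H1.
  assert (Hr : 0 < Rabs (Im z)) by (apply Rabs_pos_lt; auto).
  set (u := exp (- (2 * PI) * Rabs (Im z))).
  assert (Hu0 : 0 < u) by apply exp_pos.
  assert (Hu1 : u < 1) by (unfold u; rewrite <- exp_0; apply exp_increasing; nra).
  set (m := Cmod (Cminus (RtoC 1) (qexp z))) in *.
  assert (Hm : 0 < m) by (apply Cmod_gt_0; auto).
  apply Rmult_le_compat_l; [nra|].
  apply Rle_div_l; [nra|].
  assert (Hu2 : 0 < u / (1 - u) ^ 2) by (apply Rdiv_lt_0_compat; nra).
  destruct (Rcase_abs (Im z)) as [Hn|Hp].
  - replace (exp (- (2 * PI) * Im z)) with (/ u) in *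
      by (unfold u; rewrite Rabs_left, <- exp_Ropp by auto; f_equal; ring).
    assert (1 <= / u) by (rewrite <- Rinv_1; apply Rinv_le_contravar; lra).
    rewrite Rabs_left1 in H1 by lra.
    assert (Hm2 : (1 - u) / u <= m) by (replace ((1 - u) / u) with (- (1 - / u)) by (field; lra); lra).
    assert (0 < (1 - u) / u) by (apply Rdiv_lt_0_compat; lra).
    assert (((1 - u) / u) ^ 2 <= m ^ 2) by (apply pow_incr; lra).
    replace (/ u) with (u / (1 - u) ^ 2 * ((1 - u) / u) ^ 2) by (field; lra).
    nra.
  - replace (exp (- (2 * PI) * Im z)) with u in * by (unfold u; rewrite Rabs_pos_eq by lra; reflexivity).
    rewrite Rabs_pos_eq in H1 by lra.
    assert ((1 - u) ^ 2 <= m ^ 2) by (apply pow_incr; lra).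
    replace u with (u / (1 - u) ^ 2 * (1 - u) ^ 2) at 1 by (field; lra).
    nra.
Qed.

Lemma qexp_Chalf_sq z : Cmult (qexp (Chalf z)) (qexp (Chalf z)) = qexp z.
Proof.
  rewrite !qexp_eq. unfold Chalf, Re, Im. simpl.
  set (x := fst z). set (y := snd z).
  replace (2 * PI * (/ 2 * x - 0 * y)) with (2 * PI * (/ 2 * x)) by ring.
  replace (- (2 * PI) * (/ 2 * y + 0 * x)) with (- (2 * PI) * (/ 2 * y)) by ring.
  replace (2 * PI * x) with (2 * (2 * PI * (/ 2 * x))) by field.
  replace (- (2 * PI) * y) with (- (2 * PI) * (/ 2 * y) + - (2 * PI) * (/ 2 * y)) by field.
  rewrite cos_2a, sin_2a, exp_plus.
  solve_C_eq.
Qed.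

Lemma qexp_Chalf_succ z : qexp (Chalf (Cplus z (RtoC 1))) = Copp (qexp (Chalf z)).
Proof.
  rewrite !Chalf_eq, !qexp_eq. unfold Re, Im. simpl.
  replace (2 * PI * (/ 2 * (fst z + 1))) with (2 * PI * (/ 2 * fst z) + PI) by field.
  rewrite Rplus_0_r, neg_cos, neg_sin. solve_C_eq.
Qed.

Lemma qexp_succ z : qexp (Cplus z (RtoC 1)) = qexp z.
Proof.
  rewrite !qexp_eq. unfold Re, Im. simpl.
  replace (2 * PI * (fst z + 1)) with (2 * PI * fst z + 2 * INR 1 * PI) by (simpl; ring).
  rewrite Rplus_0_r, cos_period, sin_period. reflexivity.
Qed.

Lemma pi_csc_sq_succ z : pi_csc_sq (Cplus z (RtoC 1)) = pi_csc_sq z.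
Proof. unfold pi_csc_sq. rewrite qexp_succ. reflexivity. Qed.

Lemma pi_csc_sq_duplication z : Im z <> 0 ->
  Cplus (pi_csc_sq (Chalf z)) (pi_csc_sq (Chalf (Cplus z (RtoC 1)))) = Cmult (RtoC 4) (pi_csc_sq z).
Proof.
  intros Hy.
  assert (Hh : forall w, Im w <> 0 -> Im (Chalf w) <> 0) by (intros w Hw; rewrite Chalf_eq; simpl; lra).
  assert (H1 := one_sub_qexp_neq_0 _ (Hh z Hy)).
  assert (H2 := one_sub_qexp_neq_0 _ (Hh (Cplus z (RtoC 1)) ltac:(rewrite Im_Cplus_RtoC; exact Hy))).
  assert (H3 := one_sub_qexp_neq_0 z Hy).
  unfold pi_csc_sq. rewrite qexp_Chalf_succ in *. rewrite <- (qexp_Chalf_sq z) in H3 |- *.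
  set (r := qexp (Chalf z)) in *.
  replace (Cminus (RtoC 1) (Copp r)) with (Cplus (RtoC 1) r) in * by ring.
  field. auto.
Qed.

Lemma sin_lb_ge_third a : 0 <= a <= 2 -> a / 3 <= sin_lb a.
Proof.
  intros H. unfold sin_lb, sin_approx, sin_term. simpl. field_simplify.
  assert (0 <= a^5 * (42 - a^2)) by (apply Rmult_le_pos; [apply pow_le; lra| nra]).
  assert (0 <= a * (4 - a^2)) by nra.
  lra.
Qed.

Lemma sin_sq_ge a : Rabs a <= PI / 2 -> a ^ 2 / 9 <= sin a ^ 2.
Proof.
  intros H. assert (HP := PI_bounds).
  destruct (Rle_dec 0 a).
  - rewrite Rabs_pos_eq in H by lra.
    assert (Hs := SIN a r ltac:(lra)). assert (Hl := sin_lb_ge_third a ltac:(lra)). nra.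
  - rewrite Rabs_left in H by lra.
    assert (Hs := SIN (- a) ltac:(lra) ltac:(lra)). assert (Hl := sin_lb_ge_third (- a) ltac:(lra)).
    rewrite sin_neg in Hs. nra.
Qed.

Lemma one_sub_cos_ge t : Rabs t <= PI -> t ^ 2 / 36 <= 1 - cos t.
Proof.
  intros H. replace t with (2 * (t / 2)) at 2 by field. rewrite cos_2a_sin.
  assert (Hs := sin_sq_ge (t / 2) ltac:(rewrite Rabs_div, (Rabs_pos_eq 2) by lra; lra)).
  nra.
Qed.

Lemma sq_le_sq_one_sub_exp t : Rabs t <= 2 * PI -> exp (- (4 * PI)) * t ^ 2 <= (1 - exp (- t)) ^ 2.
Proof.
  intros H. assert (HP := PI_bounds).
  assert (E4 : exp (- (4 * PI)) = exp (- (2 * PI)) * exp (- (2 * PI))) by (rewrite <- exp_plus; f_equal; ring).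
  assert (H2 : 0 < exp (- (2 * PI))) by apply exp_pos.
  assert (H3 : exp (- (2 * PI)) <= 1) by (rewrite <- exp_0; apply exp_le_compat; lra).
  rewrite E4. destruct (Rle_dec 0 t).
  - rewrite Rabs_pos_eq in H by lra.
    assert (Hi := exp_ineq1_le t).
    assert (Hm : exp (- t) * exp t = 1) by (rewrite <- exp_plus, Rplus_opp_l; apply exp_0).
    assert (Hge : exp (- (2 * PI)) <= exp (- t)) by (apply exp_le_compat; lra).
    assert (He : 0 < exp (- t)) by apply exp_pos.
    assert (t * exp (- t) <= 1 - exp (- t)) by nra.
    assert (t * exp (- (2 * PI)) <= 1 - exp (- t)) by nra.
    assert (0 <= t * exp (- (2 * PI))) by nra.
    nra.
  - rewrite Rabs_left in H by lra.
    assert (Hi := exp_ineq1_le (- t)).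
    assert (- t * exp (- (2 * PI)) <= exp (- t) - 1) by nra.
    assert (0 <= - t * exp (- (2 * PI))) by nra.
    nra.
Qed.

Definition kappa := 4 * PI ^ 2 * exp (- (4 * PI)) / 36.

Lemma kappa_pos : 0 < kappa.
Proof.
  unfold kappa. assert (HP := PI_bounds). assert (0 < exp (- (4 * PI))) by apply exp_pos.
  apply Rdiv_lt_0_compat; [|lra]. apply Rmult_lt_0_compat; [nra | auto].
Qed.

Lemma Cmod_one_sub_qexp_ge z : Rabs (Re z) <= 1/2 -> Rabs (Im z) <= 1 ->
  kappa * Cmod z ^ 2 <= Cmod (Cminus (RtoC 1) (qexp z)) ^ 2.
Proof.
  intros Hx Hy. assert (HP := PI_bounds). rewrite Cmod_sq.
  set (x := Re z) in *. set (y := Im z) in *.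
  set (E := exp (- (2 * PI) * y)). set (th := 2 * PI * x).
  replace (Cmod (Cminus (RtoC 1) (qexp z)) ^ 2) with ((1 - E) ^ 2 + 2 * E * (1 - cos th)).
  2: { rewrite qexp_eq, Cmod_sq. fold x y E th. unfold Re, Im. simpl.
       assert (Hsc := sin2_cos2 th). unfold Rsqr in Hsc. nra. }
  assert (HE0 : 0 < exp (- (2 * PI))) by apply exp_pos.
  assert (HE : exp (- (2 * PI)) <= E).
  { apply exp_le_compat. assert (y <= 1) by (apply Rabs_le_between in Hy; lra). nra. }
  assert (G1 := sq_le_sq_one_sub_exp (2 * PI * y) ltac:(rewrite Rabs_mult, Rabs_pos_eq by lra; nra)).
  replace (- (2 * PI * y)) with (- (2 * PI) * y) in G1 by ring. fold E in G1.
  assert (G2 := one_sub_cos_ge th ltac:(unfold th; rewrite Rabs_mult, Rabs_pos_eq by lra; nra)).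
  assert (E4 : exp (- (4 * PI)) = exp (- (2 * PI)) * exp (- (2 * PI))) by (rewrite <- exp_plus; f_equal; ring).
  assert (H3 : exp (- (2 * PI)) <= 1) by (rewrite <- exp_0; apply exp_le_compat; lra).
  assert (H4 : 0 < exp (- (4 * PI))) by apply exp_pos.
  assert (Ha : kappa * y ^ 2 <= (1 - E) ^ 2).
  { replace (kappa * y ^ 2) with (exp (- (4 * PI)) * (2 * PI * y) ^ 2 / 36) by (unfold kappa; field).
    assert (0 <= exp (- (4 * PI)) * (2 * PI * y) ^ 2) by (apply Rmult_le_pos; [lra | apply pow2_ge_0]). lra. }
  assert (Hb : kappa * x ^ 2 <= 2 * E * (1 - cos th)).
  { replace (kappa * x ^ 2) with (exp (- (4 * PI)) * (th ^ 2 / 36)) by (unfold kappa, th; field).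
    assert (0 <= th ^ 2 / 36) by (apply Rmult_le_pos; [apply pow2_ge_0 | lra]).
    assert (exp (- (4 * PI)) <= E) by (rewrite E4; nra).
    assert (exp (- (4 * PI)) * (th ^ 2 / 36) <= E * (th ^ 2 / 36)) by (apply Rmult_le_compat_r; lra).
    assert (E * (th ^ 2 / 36) <= E * (1 - cos th)) by (apply Rmult_le_compat_l; lra).
    assert (0 <= E * (1 - cos th)) by (apply Rmult_le_pos; lra).
    lra. }
  lra.
Qed.

Lemma Cmod_two_pi_i_mul z : Cmod (two_pi_i_mul z) = 2 * PI * Cmod z.
Proof.
  replace (two_pi_i_mul z) with (Cmult (0, 2 * PI) z) by (unfold two_pi_i_mul, Re, Im; solve_C_eq).
  rewrite Cmod_mult, Cmod_pair. f_equal.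
  replace (0 ^ 2 + (2 * PI) ^ 2) with ((2 * PI) ^ 2) by ring.
  apply sqrt_pow2. assert (H := PI_bounds). lra.
Qed.

Lemma pi_csc_sq_sub_pole_eq z : z <> RtoC 0 -> Im z <> 0 ->
  let u := two_pi_i_mul z in
  let rem := Cminus (Cminus (Cminus (Cexp u) (RtoC 1)) u) (Cmult (Cmult u u) (RtoC (/ 2))) in
  Cminus (pi_csc_sq z) (Cinv (Cmult z z)) =
  Cdiv (Cminus (Cmult (Cmult (Cmult u u) (Cmult u u)) (RtoC (/ 4))) (Cplus (Cmult (Cmult (RtoC 2) u) rem) (Cmult rem rem)))
       (Cmult (Cmult (Cminus (RtoC 1) (qexp z)) (Cminus (RtoC 1) (qexp z))) (Cmult z z)).
Proof.
  intros Hz Hy u rem.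
  assert (Hq := one_sub_qexp_neq_0 z Hy).
  assert (Hu2 : Cmult u u = Cmult (RtoC (- (4 * PI ^ 2))) (Cmult z z)) by (unfold u, two_pi_i_mul, Re, Im; solve_C_eq).
  assert (Hqe : qexp z = Cplus (Cplus (Cplus (RtoC 1) u) (Cmult (Cmult u u) (RtoC (/ 2)))) rem)
    by (unfold rem, qexp; fold u; ring).
  unfold pi_csc_sq. set (q := qexp z) in *.
  transitivity (Cdiv (Cminus (Cmult (Cmult (RtoC (- (4 * PI ^ 2))) (Cmult z z)) q) (Cmult (Cminus (RtoC 1) q) (Cminus (RtoC 1) q)))
                     (Cmult (Cmult (Cminus (RtoC 1) q) (Cminus (RtoC 1) q)) (Cmult z z))).
  - field. auto.
  - rewrite <- Hu2. f_equal. rewrite Hqe. clear. destruct u, rem. apply injective_projections; simpl; field.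
Qed.

Lemma Cmod_laurent_numerator_le (u rem : C) M : 0 <= M -> Cmod u <= 10 -> Cmod rem <= M * Cmod u ^ 3 ->
  Cmod (Cminus (Cmult (Cmult (Cmult u u) (Cmult u u)) (RtoC (/ 4))) (Cplus (Cmult (Cmult (RtoC 2) u) rem) (Cmult rem rem)))
  <= (1/4 + 2 * M + 100 * M ^ 2) * Cmod u ^ 4.
Proof.
  intros HM Hu Hr.
  eapply Rle_trans; [apply Cmod_triangle|]. rewrite Cmod_opp.
  eapply Rle_trans; [apply Rplus_le_compat_l, Cmod_triangle|].
  rewrite !Cmod_mult, !Cmod_R, !Rabs_pos_eq by lra.
  set (U := Cmod u) in *. set (r := Cmod rem) in *.
  assert (HU0 : 0 <= U) by apply Cmod_ge_0. assert (Hr0 : 0 <= r) by apply Cmod_ge_0.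
  assert (r * r <= (M * U ^ 3) * (M * U ^ 3)) by (apply Rmult_le_compat; lra).
  assert (2 * U * r <= 2 * U * (M * U ^ 3)) by (apply Rmult_le_compat_l; lra).
  assert (U ^ 2 <= 100) by nra.
  assert (0 <= U ^ 4) by (apply pow_le; lra).
  assert (M ^ 2 * U ^ 2 * U ^ 4 <= M ^ 2 * 100 * U ^ 4).
  { apply Rmult_le_compat_r; [lra|]. apply Rmult_le_compat_l; [nra | lra]. }
  replace ((M * U ^ 3) * (M * U ^ 3)) with (M ^ 2 * U ^ 2 * U ^ 4) in * by ring.
  nra.
Qed.

Lemma Cmod_pi_csc_sq_sub_pole_le : exists C, forall z, Im z <> 0 -> Rabs (Re z) <= 1/2 -> Rabs (Im z) <= 1 ->
  Cmod (Cminus (pi_csc_sq z) (Cinv (Cmult z z))) <= C.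
Proof.
  set (M := 8 * exp 10). set (K := 1/4 + 2 * M + 100 * M ^ 2).
  exists (16 * PI ^ 4 * K / kappa). intros z Hy Hx Hy1.
  assert (HP := PI_bounds). assert (Hk := kappa_pos).
  assert (HM : 0 < M) by (unfold M; assert (0 < exp 10) by apply exp_pos; lra).
  assert (HK : 0 < K) by (unfold K; nra).
  assert (Hz0 : z <> RtoC 0) by (intros E; apply Hy; rewrite E; reflexivity).
  rewrite (pi_csc_sq_sub_pole_eq z Hz0 Hy).
  set (u := two_pi_i_mul z).
  assert (Hq0 := one_sub_qexp_neq_0 z Hy).
  rewrite Cmod_div by auto using Cmult_neq_0. rewrite !Cmod_mult.
  set (a := Cmod z). set (m := Cmod (Cminus (RtoC 1) (qexp z))).
  assert (Ha : 0 < a) by (apply Cmod_gt_0; auto).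
  assert (Hm : 0 < m) by (apply Cmod_gt_0; auto).
  assert (Hgap := Cmod_one_sub_qexp_ge z Hx Hy1). fold a m in Hgap.
  assert (Hu : Cmod u = 2 * PI * a) by apply Cmod_two_pi_i_mul.
  assert (Ha1 : a <= 6/5).
  { assert (a ^ 2 <= (6/5) ^ 2); [|nra].
    unfold a. rewrite Cmod_sq. apply Rabs_le_between in Hx, Hy1. nra. }
  assert (Hu10 : Cmod u <= 10) by nra.
  assert (Hrem : Cmod (Cminus (Cminus (Cminus (Cexp u) (RtoC 1)) u) (Cmult (Cmult u u) (RtoC (/ 2))))
                 <= M * Cmod u ^ 3).
  { destruct u as [ur ui]. eapply Rle_trans; [apply Cmod_Cexp_taylor_le|].
    assert (exp (Cmod (ur, ui)) <= exp 10) by (apply exp_le_compat; lra).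
    assert (0 <= Cmod (ur, ui) ^ 3) by (apply pow_le; apply Cmod_ge_0). unfold M. nra. }
  apply Rle_div_l; [apply Rmult_lt_0_compat; nra|].
  eapply Rle_trans; [apply (Cmod_laurent_numerator_le _ _ M); lra|]. fold K.
  rewrite Hu.
  replace (K * (2 * PI * a) ^ 4) with (16 * PI ^ 4 * K / kappa * (kappa * a ^ 2 * (a * a))) by (field; lra).
  apply Rmult_le_compat_l; [|apply Rmult_le_compat_r; nra].
  apply Rmult_le_pos; [assert (0 < PI ^ 4) by (apply pow_lt; lra); nra | left; apply Rinv_0_lt_compat; lra].
Qed.

Lemma Sterm_0_Chalf w : w <> RtoC 0 -> Sterm 0 (Chalf w) = Cmult (RtoC 4) (Sterm 0 w).
Proof.
  intros Hw.
  assert (Hh : Chalf w <> RtoC 0).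
  { intros E. apply Hw. replace w with (Cmult (RtoC 2) (Chalf w)) by (unfold Chalf; apply injective_projections; simpl; field).
    rewrite E. ring. }
  rewrite !Sterm_0 by auto. unfold Chalf.
  rewrite RtoC_inv by lra.
  assert (RtoC 2 <> RtoC 0) by (intros E; injection E; lra).
  replace (RtoC 4) with (Cmult (RtoC 2) (RtoC 2)) by (rewrite <- RtoC_mult; f_equal; ring).
  field. auto.
Qed.

Lemma Spair_0_duplication z n : Im z <> 0 ->
  Cplus (Spair 0 (Chalf z) n) (Spair 0 (Chalf (Cplus z (RtoC 1))) n) =
  Cmult (RtoC 4) (Cplus (Spair 0 z (2 * n)) (Spair 0 z (Datatypes.S (2 * n)))).
Proof.
  intros Hy. unfold Spair.
  replace (Cplus (Chalf z) (RtoC (INR n))) with (Chalf (Cplus z (RtoC (INR (2 * n)))))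
    by (rewrite mult_INR; unfold Chalf; apply injective_projections; simpl; field).
  replace (Cminus (Chalf z) (RtoC (INR n + 1))) with (Chalf (Cminus z (RtoC (INR (Datatypes.S (2 * n)) + 1))))
    by (rewrite S_INR, mult_INR; unfold Chalf; apply injective_projections; simpl; field).
  replace (Cplus (Chalf (Cplus z (RtoC 1))) (RtoC (INR n))) with (Chalf (Cplus z (RtoC (INR (Datatypes.S (2 * n))))))
    by (rewrite S_INR, mult_INR; unfold Chalf; apply injective_projections; simpl; field).
  replace (Cminus (Chalf (Cplus z (RtoC 1))) (RtoC (INR n + 1))) with (Chalf (Cminus z (RtoC (INR (2 * n) + 1))))
    by (rewrite mult_INR; unfold Chalf; apply injective_projections; simpl; field).
  rewrite !Sterm_0_Chalf by (first [apply Cplus_RtoC_neq_0 | apply Cminus_RtoC_neq_0]; auto).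
  ring.
Qed.

Lemma csum_Spair_0_duplication z N : Im z <> 0 ->
  csum (fun n => Cplus (Spair 0 (Chalf z) n) (Spair 0 (Chalf (Cplus z (RtoC 1))) n)) N =
  Cmult (RtoC 4) (csum (Spair 0 z) (2 * N)).
Proof.
  intros Hy. induction N.
  - simpl. ring.
  - replace (2 * Datatypes.S N)%nat with (Datatypes.S (Datatypes.S (2 * N))) by lia.
    cbn [csum]. rewrite IHN, Spair_0_duplication by auto. ring.
Qed.

Lemma S_0_duplication z : Im z <> 0 ->
  Cplus (S 0 (Chalf z)) (S 0 (Chalf (Cplus z (RtoC 1)))) = Cmult (RtoC 4) (S 0 z).
Proof.
  intros Hy.
  assert (Hy1 : Im (Chalf z) <> 0) by (rewrite Chalf_eq; simpl; lra).
  assert (Hy2 : Im (Chalf (Cplus z (RtoC 1))) <> 0) by (rewrite Chalf_eq, Im_Cplus_RtoC; simpl; lra).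
  destruct (ex_series_Spair 0 z ltac:(lra) Hy) as [l Hl].
  destruct (ex_series_Spair 0 _ ltac:(lra) Hy1) as [l1 Hl1].
  destruct (ex_series_Spair 0 _ ltac:(lra) Hy2) as [l2 Hl2].
  rewrite (S_eq_of_is_series _ _ _ Hl), (S_eq_of_is_series _ _ _ Hl1), (S_eq_of_is_series _ _ _ Hl2).
  rewrite is_series_csum in Hl, Hl1, Hl2.
  apply (is_Clim_seq_unique (csum (fun n => Cplus (Spair 0 (Chalf z) n) (Spair 0 (Chalf (Cplus z (RtoC 1))) n)))).
  - eapply is_Clim_seq_ext; [intros n; symmetry; apply csum_plus|]. apply is_Clim_seq_plus; auto.
  - eapply is_Clim_seq_ext; [intros n; symmetry; apply csum_Spair_0_duplication; auto|].
    apply is_Clim_seq_scal. apply (is_Clim_seq_comp_ge (csum (Spair 0 z)) l (fun n => 2 * n)%nat); auto. lia.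
Qed.

Lemma Cmod_Sterm_0_le w rho : 0 < rho -> rho <= Cmod w -> Cmod (Sterm 0 w) <= / rho ^ 2.
Proof.
  intros Hr Hw. eapply Rle_trans; [apply Cmod_Sterm_le; eauto; lra|].
  replace (- (2 + 2 * 0)) with (- INR 2) by (simpl; ring).
  rewrite Rpower_Ropp, Rpower_pow by auto. lra.
Qed.

Lemma rsum_inv_sq_le N : rsum (fun n => / (INR n + 1) ^ 2) N <= 2 - 2 / (INR N + 1).
Proof.
  induction N; [simpl; lra|].
  cbn [rsum]. rewrite S_INR. assert (Hn := pos_INR N).
  assert (/ (INR N + 1) ^ 2 <= 2 / (INR N + 1) - 2 / (INR N + 1 + 1)).
  { replace (2 / (INR N + 1) - 2 / (INR N + 1 + 1)) with (/ ((INR N + 1) * (INR N + 2) / 2)) by (field; lra).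
    apply Rinv_le_contravar; [apply Rdiv_lt_0_compat; nra|]. apply Rle_div_r; nra. }
  lra.
Qed.

Lemma Cmod_S_0_sub_pole_le z : Im z <> 0 -> Rabs (Re z) <= 1/2 ->
  Cmod (Cminus (S 0 z) (Cinv (Cmult z z))) <= 20.
Proof.
  intros Hy Hx.
  assert (Hz : z <> RtoC 0) by (intros E; apply Hy; rewrite E; reflexivity).
  destruct (ex_series_Spair 0 z ltac:(lra) Hy) as [l Hl].
  rewrite (S_eq_of_is_series _ _ _ Hl). rewrite is_series_csum in Hl.
  apply (is_Clim_seq_comp_ge _ _ Datatypes.S) in Hl; [|auto].
  apply (is_Clim_seq_norm_le _ _ _ (is_Clim_seq_minus _ _ _ _ Hl (is_Clim_seq_const (Cinv (Cmult z z))))).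
  intros N. cbv beta.
  rewrite csum_S_l. unfold Spair at 1.
  replace (Cplus z (RtoC (INR 0))) with z by solve_C_eq. rewrite Sterm_0 by auto.
  set (tail := csum (fun n => Spair 0 z (Datatypes.S n)) N).
  replace (Cminus (Cplus (Cplus (Cinv (Cmult z z)) (Sterm 0 (Cminus z (RtoC (INR 0 + 1))))) tail) (Cinv (Cmult z z)))
    with (Cplus (Sterm 0 (Cminus z (RtoC (INR 0 + 1)))) tail) by ring.
  eapply Rle_trans; [apply Cmod_triangle|].
  assert (Hre : forall r, Rabs r >= 1 -> Rabs r - 1/2 <= Cmod (Cplus z (RtoC r))).
  { intros r Hr. eapply Rle_trans; [|apply Cmod_re_le]. unfold Re in *. simpl.
    unfold Rabs in *; repeat destruct Rcase_abs; lra. }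
  assert (H1 : Cmod (Sterm 0 (Cminus z (RtoC (INR 0 + 1)))) <= 4).
  { eapply Rle_trans; [apply (Cmod_Sterm_0_le _ (1/2)); [lra|]|lra].
    assert (E1 : Rabs (-1) = 1) by (rewrite Rabs_left; lra).
    specialize (Hre (-1) ltac:(lra)).
    replace (Cminus z (RtoC (INR 0 + 1))) with (Cplus z (RtoC (-1))) by solve_C_eq. lra. }
  assert (H2 : Cmod tail <= 16).
  { eapply Rle_trans; [apply Cmod_csum_le|].
    eapply Rle_trans; [apply rsum_le with (b := fun n => 8 * / (INR n + 1) ^ 2)|].
    - intros n _. unfold Spair. eapply Rle_trans; [apply Cmod_triangle|].
      assert (Hn := pos_INR n).
      assert (B : forall r, INR n + 1 <= Rabs r -> Cmod (Sterm 0 (Cplus z (RtoC r))) <= 4 * / (INR n + 1) ^ 2).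
      { intros r Hr. eapply Rle_trans; [apply (Cmod_Sterm_0_le _ ((INR n + 1) / 2)); [lra|]|].
        - specialize (Hre r ltac:(lra)). lra.
        - right. field. lra. }
      assert (B1 := B (INR (Datatypes.S n)) ltac:(rewrite S_INR, Rabs_pos_eq; lra)).
      assert (B2 := B (- (INR (Datatypes.S n) + 1)) ltac:(rewrite S_INR, Rabs_Ropp, Rabs_pos_eq; lra)).
      replace (Cminus z (RtoC (INR (Datatypes.S n) + 1))) with (Cplus z (RtoC (- (INR (Datatypes.S n) + 1)))) by solve_C_eq.
      lra.
    - rewrite rsum_scal. assert (Hb := rsum_inv_sq_le N). assert (Hn := pos_INR N).
      assert (0 < 2 / (INR N + 1)) by (apply Rdiv_lt_0_compat; lra). lra. }
  lra.
Qed.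

(* Herglotz's trick: [|f| <= B] forces [|f| <= B / 2^k] for every [k]. *)
Lemma duplication_bounded_eq_0 (f : C -> C) B :
  (forall z, Im z <> 0 -> Cmod (f z) <= B) ->
  (forall z, Im z <> 0 -> Cplus (f (Chalf z)) (f (Chalf (Cplus z (RtoC 1)))) = Cmult (RtoC 4) (f z)) ->
  forall z, Im z <> 0 -> f z = RtoC 0.
Proof.
  intros Hb Hd.
  assert (Hk : forall k w, Im w <> 0 -> Cmod (f w) * 2 ^ k <= B).
  { induction k; intros w Hw; [simpl; rewrite Rmult_1_r; auto|].
    assert (Hw1 : Im (Chalf w) <> 0) by (rewrite Chalf_eq; simpl; lra).
    assert (Hw2 : Im (Chalf (Cplus w (RtoC 1))) <> 0) by (rewrite Chalf_eq, Im_Cplus_RtoC; simpl; lra).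
    assert (A1 := IHk _ Hw1). assert (A2 := IHk _ Hw2).
    assert (E : Cmod (Cmult (RtoC 4) (f w)) = 4 * Cmod (f w)) by (rewrite Cmod_mult, Cmod_R, Rabs_pos_eq; lra).
    rewrite <- Hd in E by auto. assert (T := Cmod_triangle (f (Chalf w)) (f (Chalf (Cplus w (RtoC 1))))).
    assert (P2 : 0 < 2 ^ k) by (apply pow_lt; lra).
    simpl. nra. }
  intros z Hz. apply Cmod_eq_0.
  destruct (Rle_lt_or_eq_dec 0 (Cmod (f z)) (Cmod_ge_0 _)) as [Hc|]; [exfalso|auto].
  destruct (eventually_INR_gt (B / Cmod (f z))) as [N HN]. specialize (HN N (le_n N)).
  assert (H := Hk N z Hz).
  assert (H2 : INR N + 1 <= 2 ^ N).
  { clear. induction N; [simpl; lra|]. rewrite S_INR. simpl. assert (1 <= 2 ^ N) by (apply pow_R1_Rle; lra). lra. }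
  assert (Hlt : B / Cmod (f z) < 2 ^ N) by lra.
  apply Rlt_div_l in Hlt; [|lra]. lra.
Qed.

Definition S_0_defect (z : C) : C := Cminus (S 0 z) (pi_csc_sq z).

Lemma S_0_defect_bounded : exists B, forall z, Im z <> 0 -> Cmod (S_0_defect z) <= B.
Proof.
  destruct Cmod_pi_csc_sq_sub_pole_le as [C HC].
  exists (212 + Rabs C). intros z Hy.
  destruct (exists_translate_into (Re z) (-1/2)) as [m Hm].
  rewrite <- (periodic_translate_int S_0_defect) with (m := m) by
    (auto; intros w Hw; unfold S_0_defect; rewrite S_translate_1, pi_csc_sq_succ by (auto; lra); reflexivity).
  set (w := Cminus z (RtoC (IZR m))).
  assert (Hyw : Im w <> 0) by (unfold w; rewrite Im_Cminus_RtoC; auto).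
  assert (Hrw : Rabs (Re w) <= 1/2) by (unfold w; rewrite Re_Cminus_RtoC; apply Rabs_le; lra).
  assert (HP := PI_bounds). assert (HC0 := Rle_abs C). assert (HC1 := Rabs_pos C).
  unfold S_0_defect. destruct (Rle_dec 1 (Rabs (Im w))).
  - eapply Rle_trans; [apply Cmod_triangle|]. rewrite Cmod_opp.
    assert (H1 := Cmod_S_le 1 0 w ltac:(lra) ltac:(lra) r).
    assert (Rpower (Rabs (Im w)) (- 1 - 2 * 0) <= 1) by (apply Rpower_nonpos_le_1; lra).
    replace (/ 1) with 1 in H1 by field.
    assert (H2 := Cmod_pi_csc_sq_le w Hyw).
    set (u := exp (- (2 * PI) * Rabs (Im w))) in H2.
    assert (Hu0 : 0 < u) by apply exp_pos.
    assert (Hu : u <= 1/2).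
    { assert (Hexp := exp_ineq1_le (2 * PI * Rabs (Im w))).
      assert (u * exp (2 * PI * Rabs (Im w)) = 1)
        by (unfold u; rewrite <- exp_plus; replace (_ + _) with 0 by ring; apply exp_0).
      assert (2 <= exp (2 * PI * Rabs (Im w))) by nra.
      nra. }
    assert (u / (1 - u) ^ 2 <= 2) by (apply Rle_div_l; nra).
    assert (0 <= u / (1 - u) ^ 2) by (apply Rdiv_le_0_compat; nra).
    assert (4 * PI ^ 2 * (u / (1 - u) ^ 2) <= 128) by nra.
    lra.
  - replace (Cminus (S 0 w) (pi_csc_sq w))
      with (Cminus (Cminus (S 0 w) (Cinv (Cmult w w))) (Cminus (pi_csc_sq w) (Cinv (Cmult w w)))) by ring.
    eapply Rle_trans; [apply Cmod_triangle|]. rewrite Cmod_opp.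
    assert (H1 := Cmod_S_0_sub_pole_le w Hyw Hrw).
    assert (H2 := HC w Hyw Hrw ltac:(lra)).
    lra.
Qed.

Lemma S_0_eq_pi_csc_sq z : Im z <> 0 -> S 0 z = pi_csc_sq z.
Proof.
  intros Hy. destruct S_0_defect_bounded as [B HB].
  assert (H := duplication_bounded_eq_0 S_0_defect B HB).
  assert (Hz : S_0_defect z = RtoC 0).
  { apply H; auto. intros w Hw. unfold S_0_defect.
    transitivity (Cminus (Cplus (S 0 (Chalf w)) (S 0 (Chalf (Cplus w (RtoC 1)))))
                         (Cplus (pi_csc_sq (Chalf w)) (pi_csc_sq (Chalf (Cplus w (RtoC 1)))))); [ring|].
    rewrite S_0_duplication, pi_csc_sq_duplication by auto. ring. }
  unfold S_0_defect in Hz. rewrite <- (Cplus_0_r (pi_csc_sq z)), <- Hz. ring.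
Qed.

Lemma Cmod_S_0_le y0 z : 0 < y0 -> y0 <= Rabs (Im z) ->
  Cmod (S 0 z) <= 4 * PI ^ 2 / (1 - exp (- (2 * PI) * y0)) ^ 2 * exp (- (2 * PI) * Rabs (Im z)).
Proof.
  intros Hy0 HY.
  assert (Hy : Im z <> 0) by (intros E; rewrite E, Rabs_R0 in HY; lra).
  rewrite S_0_eq_pi_csc_sq by auto.
  eapply Rle_trans; [apply Cmod_pi_csc_sq_le; auto|].
  assert (HP := PI_bounds).
  set (u := exp (- (2 * PI) * Rabs (Im z))). set (u0 := exp (- (2 * PI) * y0)).
  assert (Hu : u <= u0) by (apply exp_le_compat; nra).
  assert (Hu0 : u0 < 1) by (unfold u0; rewrite <- exp_0; apply exp_increasing; nra).
  assert (0 < u) by apply exp_pos.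
  assert ((1 - u0) ^ 2 <= (1 - u) ^ 2) by (apply pow_incr; lra).
  assert (0 < (1 - u0) ^ 2) by (apply pow_lt; lra).
  assert (u / (1 - u) ^ 2 <= u / (1 - u0) ^ 2) by (apply Rmult_le_compat_l; [lra | apply Rinv_le_contravar; lra]).
  replace (4 * PI ^ 2 / (1 - u0) ^ 2 * u) with (4 * PI ^ 2 * (u / (1 - u0) ^ 2)) by (field; lra).
  apply Rmult_le_compat_l; [nra | lra].
Qed.

Lemma half_Rpower_le_main_term e Y : 0 < e <= 1 -> 0 < Y ->
  e / 2 * Rpower Y (-1 - 2 * e) <= 1 / (Gamma e * Rpower Y (1 + 2 * e)).
Proof.
  intros He HY. destruct (Gamma_pos_le e He) as [HG1 HG2].
  assert (HP := Rpower_pos Y (1 + 2 * e)).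
  replace (-1 - 2 * e) with (- (1 + 2 * e)) by ring. rewrite Rpower_Ropp.
  replace (1 / (Gamma e * Rpower Y (1 + 2 * e))) with (/ Rpower Y (1 + 2 * e) * / Gamma e) by (field; lra).
  replace (e / 2 * / Rpower Y (1 + 2 * e)) with (/ Rpower Y (1 + 2 * e) * / (2 / e)) by (field; lra).
  apply Rmult_le_compat_l; [left; apply Rinv_0_lt_compat; lra|].
  apply Rinv_le_contravar; lra.
Qed.

Lemma Cmod_S_le_Rpower_exp y0 : 0 < y0 -> exists C, 0 < C /\
  forall z e, y0 <= Rabs (Im z) -> 0 < e <= 1 ->
  Cmod (S e z) <= C * (e * Rpower (Rabs (Im z)) (-1 - 2 * e) + exp (- (2 * PI) * Rabs (Im z))).
Proof.
  intros hy0. assert (HP := PI_bounds).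
  destruct (Cmod_S_sub_S_0_le y0 hy0) as [Cd [HCd Hdiff]].
  set (K := 32 * (1 + / y0)).
  set (C0 := 4 * PI ^ 2 / (1 - exp (- (2 * PI) * y0)) ^ 2).
  assert (HK : 0 < K) by (unfold K; assert (0 < / y0) by (apply Rinv_0_lt_compat; lra); lra).
  assert (HC0 : 0 < C0).
  { assert (exp (- (2 * PI) * y0) < 1) by (rewrite <- exp_0; apply exp_increasing; nra).
    apply Rdiv_lt_0_compat; [nra | apply pow_lt; lra]. }
  exists (4 * K + Cd + C0). split; [lra|]. intros z e HY He.
  set (P := Rpower (Rabs (Im z)) (-1 - 2 * e)). set (T := exp (- (2 * PI) * Rabs (Im z))).
  assert (HP0 : 0 < P) by apply Rpower_pos.
  assert (HT : 0 < T) by apply exp_pos.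
  assert (HeP : 0 < e * P) by nra.
  assert (0 < K * T /\ 0 < Cd * T /\ 0 < C0 * T /\ 0 < K * (e * P) /\ 0 < Cd * (e * P) /\ 0 < C0 * (e * P))
    by (repeat split; apply Rmult_lt_0_compat; lra).
  destruct (Rle_dec (1/4) e) as [Hlarge|Hsmall].
  - assert (HS := Cmod_S_le y0 e z hy0 ltac:(lra) HY). fold K P in HS.
    assert (K * P <= 4 * K * (e * P)) by nra. nra.
  - replace (S e z) with (Cplus (Cminus (S e z) (S 0 z)) (S 0 z)) by ring.
    eapply Rle_trans; [apply Cmod_triangle|].
    assert (D := Hdiff e z ltac:(lra) HY). fold P in D.
    assert (E0 := Cmod_S_0_le y0 z hy0 HY). fold C0 T in E0.
    nra.
Qed.

Theorem lemma1p6 (y0 : R) (hy0 : 0 < y0) :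
  exists Cst : R, 0 < Cst /\
    forall (z : C) (eps : R),
      y0 <= Rabs (Im z) -> 0 < eps <= 1 ->
      Cmod (S eps z) <=
        Cst * (1 / (Gamma eps * Rpower (Rabs (Im z)) (1 + 2 * eps))
               + exp (- 2 * PI * Rabs (Im z))).
Proof.
  destruct (Cmod_S_le_Rpower_exp y0 hy0) as [C [HC Hbound]].
  exists (2 * C). split; [lra|]. intros z e HY He.
  eapply Rle_trans; [apply Hbound; auto|].
  assert (HT1 := half_Rpower_le_main_term e (Rabs (Im z)) He ltac:(lra)).
  assert (HT2 := exp_pos (- (2 * PI) * Rabs (Im z))).
  replace (- 2 * PI * Rabs (Im z)) with (- (2 * PI) * Rabs (Im z)) by ring.
  nra.
Qed.
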